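(* Let $\varepsilon>0$ and let $f$ be holomorphic on $(1+\varepsilon)\mathbb{D}=\{z\in\mathbb{C}:|z|<1+\varepsilon\}$ such that $f(\overline{\mathbb{D}})=\overline{\mathbb{D}}$ and $f((1+\varepsilon)\mathbb{D})\subset(1+\varepsilon)\mathbb{D}$. Then $f$ is a rotation, i.e. there is $\beta\in\mathbb{C}$ with $|\beta|=1$ such that $f(z)=\beta z$ for all $z$.
   Context: $\mathbb{D}$ is the open unit disc and $\overline{\mathbb{D}}$ its closure. *)

From Stdlib Require Import Reals.
From Coquelicot Require Export Coquelicot.
Open Scope R_scope.

Definition C_holomorphic_at (f : C -> C) (z : C) : Prop :=
  @ex_derive C_AbsRing C_NormedModule f z.

Definition holomorphic_on_disc (r : R) (f : C -> C) : Prop :=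
  forall z : C, Cmod z < r -> C_holomorphic_at f z.

From Stdlib Require Import Reals Lra Psatz Classical.
From Coquelicot Require Import Coquelicot.
Open Scope R_scope.

(* Rescaling by [r = 1 + eps], [g w = f (r w) / r] maps the unit disc into the closed unit
   disc and the closed disc of radius [rho = 1 / r] onto itself.  If [a = g 0] were nonzero,
   composing [g] with the disc automorphism sending [a] to [0] would give a self-map of the disc
   fixing [0] and sending a point of modulus at most [rho] (a preimage of [-rho a / |a|]) to a
   point of modulus [(rho + |a|) / (1 + rho |a|) > rho], against the Schwarz lemma.  So
   [g 0 = 0]; a preimage of [rho] then realises the equality case of the Schwarz lemma, and [g],
   hence [f], is a rotation.

   The Schwarz lemma is proved from Goursat's theorem for rectangles, allowing one point where
   the function is merely continuous.  Pulled back along the exponential, it gives the mean value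
   property on circles, which a disc automorphism turns into the maximum modulus principle with
   its equality case; the Schwarz lemma applies it to [H w / w] for a self-map [H] of the disc
   fixing [0]. *)

Lemma Rabs_im_le_Cmod (z : C) : Rabs (Im z) <= Cmod z.
Proof. generalize (Rmax_Cmod z) (Rmax_r (Rabs (fst z)) (Rabs (snd z))). unfold Im. lra. Qed.

Lemma Cmod_le_Rabs_re_im (z : C) : Cmod z <= Rabs (Re z) + Rabs (Im z).
Proof.
  destruct z as [a b]. unfold Cmod, Re, Im; simpl.
  rewrite <- (sqrt_pow2 (Rabs a + Rabs b)) by (generalize (Rabs_pos a) (Rabs_pos b); lra).
  apply sqrt_le_1_alt. rewrite !Rmult_1_r.
  assert (Ea : a * a = Rabs a * Rabs a) by (rewrite <- Rabs_mult; symmetry; apply Rabs_pos_eq; nra).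
  assert (Eb : b * b = Rabs b * Rabs b) by (rewrite <- Rabs_mult; symmetry; apply Rabs_pos_eq; nra).
  rewrite Ea, Eb. generalize (Rabs_pos a) (Rabs_pos b). nra.
Qed.

Lemma Cmod_RtoC_mult (t : R) (w : C) : 0 <= t -> Cmod (RtoC t * w) = t * Cmod w.
Proof. intros Ht. rewrite Cmod_mult, Cmod_R, Rabs_pos_eq; auto. Qed.

Lemma RtoC_scaleK (t : R) (w : C) : t <> 0 -> (RtoC t * (RtoC (/ t) * w))%C = w.
Proof. intros Ht. rewrite Cmult_assoc, <- RtoC_mult, Rinv_r, Cmult_1_l by exact Ht. reflexivity. Qed.

Lemma RtoC_inv_scaleK (t : R) (w : C) : t <> 0 -> (RtoC (/ t) * (RtoC t * w))%C = w.
Proof. intros Ht. rewrite Cmult_assoc, <- RtoC_mult, Rinv_l, Cmult_1_l by exact Ht. reflexivity. Qed.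

(** * Complex derivatives *)

(* [C_holomorphic_at] differentiates into [C_NormedModule]; Coquelicot's product and chain
   rules are stated for [AbsRing_NormedModule C_AbsRing], which has the same norm. *)
Definition is_C_derive (f : C -> C) (z l : C) : Prop :=
  @is_derive C_AbsRing (AbsRing_NormedModule C_AbsRing) f z l.

Definition ex_C_derive (f : C -> C) (z : C) : Prop := exists l, is_C_derive f z l.

Lemma C_holomorphic_at_ex_C_derive (f : C -> C) (z : C) : C_holomorphic_at f z -> ex_C_derive f z.
Proof.
  intros [l [_ Hd]]. exists l. split; [apply is_linear_scal_l |].
  intros x Hx eps. exact (Hd x Hx eps).
Qed.

Lemma is_C_derive_eps (f : C -> C) (z l : C) :
  is_C_derive f z l <->
  forall eps, 0 < eps -> exists delta, 0 < delta /\
    forall w, Cmod (w - z) < delta -> Cmod (f w - f z - l * (w - z)) <= eps * Cmod (w - z).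
Proof.
  split.
  - intros [_ Hd] eps Heps.
    destruct (Hd z (fun P HP => HP) (mkposreal eps Heps)) as [d Hw].
    exists d. split; [apply cond_pos |]. intros w Hwz.
    rewrite (Cmult_comm l). exact (Hw w Hwz).
  - intros H. split; [apply is_linear_scal_l |].
    intros x Hx. apply (@is_filter_lim_locally_unique _ (AbsRing_NormedModule C_AbsRing)) in Hx. subst x.
    intros [eps Heps]. destruct (H eps Heps) as [d [Hd Hw]].
    exists (mkposreal d Hd). intros w Hwz. simpl.
    change (Cmod (f w - f z - (w - z) * l)%C <= eps * Cmod (w - z)%C).
    rewrite (Cmult_comm (w - z)). exact (Hw w Hwz).
Qed.

Definition C_continuous_at (f : C -> C) (z : C) : Prop :=
  forall eps, 0 < eps -> exists delta, 0 < delta /\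
    forall w, Cmod (w - z) < delta -> Cmod (f w - f z) < eps.

Lemma is_C_derive_continuous (f : C -> C) (z l : C) : is_C_derive f z l -> C_continuous_at f z.
Proof.
  intros Hd eps Heps.
  destruct (proj1 (is_C_derive_eps f z l) Hd 1 Rlt_0_1) as [d [Hd0 Hlin]].
  assert (Hl := Cmod_ge_0 l).
  exists (Rmin d (eps / (Cmod l + 2))). split.
  { apply Rmin_pos; [lra | apply Rdiv_lt_0_compat; lra]. }
  intros w Hw.
  assert (Hw1 : Cmod (w - z) < d) by (eapply Rlt_le_trans; [exact Hw | apply Rmin_l]).
  assert (Hw2 : Cmod (w - z) < eps / (Cmod l + 2)) by (eapply Rlt_le_trans; [exact Hw | apply Rmin_r]).
  assert (Heps' : eps = eps / (Cmod l + 2) * (Cmod l + 2)) by (field; lra).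
  assert (Hwz := Cmod_ge_0 (w - z)).
  replace (f w - f z)%C with ((f w - f z - l * (w - z)) + l * (w - z))%C by ring.
  eapply Rle_lt_trans; [apply Cmod_triangle |]. rewrite Cmod_mult.
  specialize (Hlin w Hw1). nra.
Qed.

Lemma ex_C_derive_continuous (f : C -> C) (z : C) : ex_C_derive f z -> C_continuous_at f z.
Proof. intros [l Hl]. exact (is_C_derive_continuous f z l Hl). Qed.

Lemma C_continuous_comp (f g : C -> C) (z : C) :
  C_continuous_at f z -> C_continuous_at g (f z) -> C_continuous_at (fun w => g (f w)) z.
Proof.
  intros Hf Hg eps Heps. destruct (Hg eps Heps) as [d1 [Hd1 H1]].
  destruct (Hf d1 Hd1) as [d2 [Hd2 H2]]. exists d2. split; auto.
Qed.

Lemma is_C_derive_const (c z : C) : is_C_derive (fun _ => c) z 0.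
Proof. exact (@is_derive_const _ (AbsRing_NormedModule C_AbsRing) c z). Qed.

Lemma is_C_derive_id (z : C) : is_C_derive (fun w => w) z 1.
Proof. exact (@is_derive_id C_AbsRing z). Qed.

Lemma is_C_derive_plus (f g : C -> C) (z a b : C) :
  is_C_derive f z a -> is_C_derive g z b -> is_C_derive (fun w => f w + g w)%C z (a + b)%C.
Proof. exact (@is_derive_plus _ (AbsRing_NormedModule C_AbsRing) f g z a b). Qed.

Lemma is_C_derive_minus (f g : C -> C) (z a b : C) :
  is_C_derive f z a -> is_C_derive g z b -> is_C_derive (fun w => f w - g w)%C z (a - b)%C.
Proof. exact (@is_derive_minus _ (AbsRing_NormedModule C_AbsRing) f g z a b). Qed.

Lemma is_C_derive_mult (f g : C -> C) (z a b : C) :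
  is_C_derive f z a -> is_C_derive g z b ->
  is_C_derive (fun w => f w * g w)%C z (a * g z + f z * b)%C.
Proof. intros Ha Hb. exact (is_derive_mult f g z a b Ha Hb Cmult_comm). Qed.

Lemma is_C_derive_scal (f : C -> C) (z a c : C) :
  is_C_derive f z a -> is_C_derive (fun w => c * f w)%C z (c * a)%C.
Proof.
  intros Ha. replace (c * a)%C with (0 * f z + c * a)%C by ring.
  exact (is_C_derive_mult _ f z 0 a (is_C_derive_const c z) Ha).
Qed.

Lemma is_C_derive_comp (f g : C -> C) (z a b : C) :
  is_C_derive f z a -> is_C_derive g (f z) b -> is_C_derive (fun w => g (f w)) z (a * b)%C.
Proof. intros Ha Hb. exact (@is_derive_comp _ (AbsRing_NormedModule C_AbsRing) g f z b a Hb Ha). Qed.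

Lemma is_C_derive_ext_loc (f g : C -> C) (z a : C) (d : R) : 0 < d ->
  (forall w, Cmod (w - z) < d -> f w = g w) -> is_C_derive f z a -> is_C_derive g z a.
Proof.
  intros Hd Hfg. apply (@is_derive_ext_loc _ (AbsRing_NormedModule C_AbsRing)).
  exists (mkposreal d Hd). intros w Hw. exact (Hfg w Hw).
Qed.

Lemma is_C_derive_Cinv (z : C) : z <> 0%C -> is_C_derive Cinv z (- / (z * z))%C.
Proof.
  intros Hz. apply is_C_derive_eps. intros eps Heps.
  assert (Hm : 0 < Cmod z) by (apply Cmod_gt_0; auto).
  set (m := Cmod z) in *.
  exists (Rmin (m / 2) (eps * (m * m * m) / 2)). split.
  { apply Rmin_pos; [lra |]. apply Rdiv_lt_0_compat; [| lra]. repeat apply Rmult_lt_0_compat; auto. }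
  intros w Hw.
  assert (Hw1 : Cmod (w - z) < m / 2) by (eapply Rlt_le_trans; [exact Hw | apply Rmin_l]).
  assert (Hw2 : Cmod (w - z) < eps * (m * m * m) / 2) by (eapply Rlt_le_trans; [exact Hw | apply Rmin_r]).
  assert (Hwm : m / 2 < Cmod w).
  { assert (Htri : m <= Cmod w + Cmod (z - w)).
    { unfold m. replace z with (w + (z - w))%C at 1 by ring. apply Cmod_triangle. }
    replace (z - w)%C with (- (w - z))%C in Htri by ring. rewrite Cmod_opp in Htri. lra. }
  assert (Hw0 : w <> 0%C) by (intro E; subst; rewrite Cmod_0 in Hwm; lra).
  replace (/ w - / z - - / (z * z) * (w - z))%C with ((w - z) * (w - z) / (w * (z * z)))%C
    by (field; auto).
  rewrite Cmod_div by (repeat apply Cmult_neq_0; auto).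
  rewrite !Cmod_mult. fold m.
  assert (Hd := Cmod_ge_0 (w - z)).
  apply Rle_div_l; [repeat apply Rmult_lt_0_compat; lra |].
  assert (Hmm : 0 < m * m) by nra.
  assert (eps * (m * m * m) / 2 <= eps * (Cmod w * (m * m))) by nra.
  assert (Cmod (w - z) <= eps * (Cmod w * (m * m))) by lra.
  nra.
Qed.

Lemma is_C_derive_div (f g : C -> C) (z a b : C) :
  is_C_derive f z a -> is_C_derive g z b -> g z <> 0%C ->
  is_C_derive (fun w => f w / g w)%C z ((a * g z - f z * b) / (g z * g z))%C.
Proof.
  intros Ha Hb Hz.
  assert (Hinv := is_C_derive_comp g Cinv z b _ Hb (is_C_derive_Cinv _ Hz)).
  assert (H := is_C_derive_mult f (fun w => / g w)%C z a _ Ha Hinv).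
  replace ((a * g z - f z * b) / (g z * g z))%C with (a * / g z + f z * (b * - / (g z * g z)))%C
    by (field; auto).
  exact H.
Qed.

(** * The complex exponential *)

Lemma MVT_Rabs_bound (f df : R -> R) (u M : R) :
  (forall x, is_derive f x (df x)) ->
  (forall c, Rabs c <= Rabs u -> Rabs (df c) <= M) ->
  Rabs (f u - f 0) <= M * Rabs u.
Proof.
  intros Hd HM.
  destruct (MVT_gen f 0 u df) as [c [Hc E]].
  - intros x _. apply Hd.
  - intros x _. apply continuity_pt_filterlim, (ex_derive_continuous f x). eexists; apply Hd.
  - rewrite E, Rabs_mult, Rminus_0_r. apply Rmult_le_compat_r; [apply Rabs_pos |].
    apply HM. unfold Rmin, Rmax in Hc. destruct (Rle_dec 0 u);
    unfold Rabs; repeat destruct Rcase_abs; lra.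
Qed.

Lemma exp_le_3_of_le_1 (u : R) : u <= 1 -> exp u <= 3.
Proof.
  intros Hu. apply (Rle_trans _ (exp 1)); [| apply exp_le_3].
  destruct (Rle_lt_or_eq_dec _ _ Hu) as [Hlt | ->]; [apply Rlt_le, exp_increasing, Hlt | lra].
Qed.

Lemma Rabs_exp_sub_1_le (u : R) : Rabs u <= 1 -> Rabs (exp u - 1) <= 3 * Rabs u.
Proof.
  intros Hu. rewrite <- exp_0.
  apply MVT_Rabs_bound with (df := exp); [apply is_derive_exp |].
  intros c Hc. rewrite Rabs_pos_eq by (apply Rlt_le, exp_pos).
  apply exp_le_3_of_le_1. apply Rabs_le_between in Hc. lra.
Qed.

Lemma Rabs_exp_sub_1_sub_le (u : R) : Rabs u <= 1 -> Rabs (exp u - 1 - u) <= 3 * u * u.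
Proof.
  intros Hu.
  assert (H := MVT_Rabs_bound (fun x => exp x - 1 - x) (fun x => exp x - 1) u (3 * Rabs u)).
  cbv beta in H. rewrite exp_0 in H.
  replace (exp u - 1 - u - (1 - 1 - 0)) with (exp u - 1 - u) in H by ring.
  rewrite Rmult_assoc, <- (Rabs_pos_eq (u * u)), Rabs_mult by nra.
  rewrite <- Rmult_assoc. apply H.
  - intros x. auto_derive; auto; ring.
  - intros c Hc. eapply Rle_trans; [apply Rabs_exp_sub_1_le; lra | lra].
Qed.

Lemma Rabs_sin_le (v : R) : Rabs (sin v) <= Rabs v.
Proof.
  rewrite <- (Rmult_1_l (Rabs v)), <- (Rminus_0_r (sin v)), <- sin_0.
  apply MVT_Rabs_bound with (df := cos); [apply is_derive_sin |].
  intros c _. apply Rabs_le, COS_bound.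
Qed.

Lemma Rabs_cos_sub_1_le (v : R) : Rabs (cos v - 1) <= v * v.
Proof.
  rewrite <- (Rabs_pos_eq (v * v)), Rabs_mult by nra. rewrite <- cos_0.
  apply MVT_Rabs_bound with (df := fun x => - sin x); [apply is_derive_cos |].
  intros c Hc. rewrite Rabs_Ropp. eapply Rle_trans; [apply Rabs_sin_le | exact Hc].
Qed.

Lemma Rabs_sin_sub_le (v : R) : Rabs v <= 1 -> Rabs (sin v - v) <= v * v.
Proof.
  intros Hv.
  assert (H := MVT_Rabs_bound (fun x => sin x - x) (fun x => cos x - 1) v (v * v)).
  cbv beta in H. rewrite sin_0 in H.
  replace (sin v - v - (0 - 0)) with (sin v - v) in H by ring.
  assert (Hvv : 0 <= v * v) by nra.
  eapply Rle_trans; [apply H |].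
  - intros x. auto_derive; auto; ring.
  - intros c Hc. eapply Rle_trans; [apply Rabs_cos_sub_1_le |].
    apply Rsqr_le_abs_1, Hc.
  - rewrite <- (Rmult_1_r (v * v)) at 2. apply Rmult_le_compat_l; auto.
Qed.

Definition Cexp (z : C) : C := (exp (Re z) * cos (Im z), exp (Re z) * sin (Im z)).

Lemma Cexp_plus (z w : C) : Cexp (z + w)%C = (Cexp z * Cexp w)%C.
Proof.
  destruct z as [a b], w as [c d]. unfold Cexp, Re, Im; simpl.
  rewrite exp_plus, cos_plus, sin_plus. apply injective_projections; simpl; ring.
Qed.

Lemma Cmod_Cexp (z : C) : Cmod (Cexp z) = exp (Re z).
Proof.
  unfold Cmod, Cexp; simpl.
  replace (_ * (_ * 1) + _ * (_ * 1)) with ((exp (Re z))² * ((sin (Im z))² + (cos (Im z))²))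
    by (unfold Rsqr; ring).
  rewrite sin2_cos2, Rmult_1_r. apply sqrt_Rsqr, Rlt_le, exp_pos.
Qed.

Lemma Cexp_neq_0 (z : C) : Cexp z <> 0%C.
Proof.
  intros E. generalize (Cmod_Cexp z) (exp_pos (Re z)). rewrite E, Cmod_0. lra.
Qed.

Lemma Cmod_Cexp_pure_imag (s : R) : Cmod (Cexp (0, s)) = 1.
Proof. rewrite Cmod_Cexp. apply exp_0. Qed.

Lemma Cexp_add_2PI (x y : R) : Cexp (x, y + 2 * PI) = Cexp (x, y).
Proof.
  unfold Cexp, Re, Im; simpl. rewrite cos_plus, sin_plus, cos_2PI, sin_2PI.
  f_equal; ring.
Qed.

Lemma Cexp_sub_1_sub_le (h : C) : Cmod h <= 1 -> Cmod (Cexp h - 1 - h) <= 12 * (Cmod h * Cmod h).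
Proof.
  intros Hh. destruct h as [u v].
  assert (Hu := re_le_Cmod (u, v)). assert (Hv := Rabs_im_le_Cmod (u, v)).
  unfold Re, Im in Hu, Hv; simpl in Hu, Hv.
  set (m := Cmod (u, v)) in *.
  eapply Rle_trans; [apply Cmod_le_Rabs_re_im |]. unfold Re, Im, Cexp; simpl.
  replace (exp u * cos v + - (1) + - u) with (exp u * cos v - 1 - u) by ring.
  replace (exp u * sin v + - 0 + - v) with (exp u * sin v - v) by ring.
  assert (Eu : exp u <= 3) by (apply exp_le_3_of_le_1; apply Rabs_le_between in Hu; lra).
  assert (Ep := exp_pos u).
  assert (Hexp2 := Rabs_exp_sub_1_sub_le u ltac:(lra)).
  assert (Hcos := Rabs_cos_sub_1_le v).
  assert (Hsin := Rabs_sin_sub_le v ltac:(lra)).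
  assert (Hexp1 := Rabs_exp_sub_1_le u ltac:(lra)).
  assert (R1 : Rabs (exp u * cos v - 1 - u) <= 3 * u * u + 3 * (v * v)).
  { replace (exp u * cos v - 1 - u) with ((exp u - 1 - u) + exp u * (cos v - 1)) by ring.
    eapply Rle_trans; [apply Rabs_triang |]. rewrite Rabs_mult, (Rabs_pos_eq (exp u)) by lra.
    assert (exp u * Rabs (cos v - 1) <= 3 * (v * v)) by (apply Rmult_le_compat; auto using Rabs_pos; lra).
    lra. }
  assert (R2 : Rabs (exp u * sin v - v) <= 3 * (v * v) + 3 * Rabs u * Rabs v).
  { replace (exp u * sin v - v) with (exp u * (sin v - v) + (exp u - 1) * v) by ring.
    eapply Rle_trans; [apply Rabs_triang |]. rewrite !Rabs_mult, (Rabs_pos_eq (exp u)) by lra.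
    assert (exp u * Rabs (sin v - v) <= 3 * (v * v)) by (apply Rmult_le_compat; auto using Rabs_pos; lra).
    assert (Rabs (exp u - 1) * Rabs v <= 3 * Rabs u * Rabs v)
      by (apply Rmult_le_compat_r; auto using Rabs_pos).
    lra. }
  assert (Hm : Rabs m = m) by apply Rabs_pos_eq, Cmod_ge_0.
  assert (Ruu : u * u <= m * m) by (apply Rsqr_le_abs_1; rewrite Hm; exact Hu).
  assert (Rvv : v * v <= m * m) by (apply Rsqr_le_abs_1; rewrite Hm; exact Hv).
  assert (Ruv : Rabs u * Rabs v <= m * m) by (apply Rmult_le_compat; auto using Rabs_pos).
  lra.
Qed.

Lemma is_C_derive_Cexp (z : C) : is_C_derive Cexp z (Cexp z).
Proof.
  apply is_C_derive_eps. intros eps Heps.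
  set (K := 12 * Cmod (Cexp z) + 1).
  assert (HK : 1 <= K) by (generalize (Cmod_ge_0 (Cexp z)); unfold K; lra).
  exists (Rmin 1 (eps / K)). split; [apply Rmin_pos; [lra | apply Rdiv_lt_0_compat; lra] |].
  intros w Hw.
  assert (Hw1 : Cmod (w - z) < 1) by (eapply Rlt_le_trans; [exact Hw | apply Rmin_l]).
  assert (Hw2 : Cmod (w - z) * K < eps).
  { apply (Rmult_lt_reg_r (/ K)); [apply Rinv_0_lt_compat; lra |].
    rewrite Rmult_assoc, Rinv_r, Rmult_1_r by lra.
    eapply Rlt_le_trans; [exact Hw | apply Rmin_r]. }
  replace (Cexp w - Cexp z - Cexp z * (w - z))%C with (Cexp z * (Cexp (w - z) - 1 - (w - z)))%C.
  2:{ replace (Cexp w) with (Cexp (z + (w - z))) by (f_equal; ring). rewrite Cexp_plus. ring. }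
  rewrite Cmod_mult.
  assert (B := Cexp_sub_1_sub_le (w - z) ltac:(lra)).
  assert (Hd := Cmod_ge_0 (w - z)). assert (Hc := Cmod_ge_0 (Cexp z)).
  assert (Hsmall : 12 * Cmod (Cexp z) * Cmod (w - z) <= eps) by (unfold K in Hw2; nra).
  eapply Rle_trans; [apply Rmult_le_compat_l; [exact Hc | exact B] |].
  replace (Cmod (Cexp z) * (12 * (Cmod (w - z) * Cmod (w - z))))
    with (12 * Cmod (Cexp z) * Cmod (w - z) * Cmod (w - z)) by ring.
  apply Rmult_le_compat_r; auto.
Qed.

Lemma C_continuous_Cexp (z : C) : C_continuous_at Cexp z.
Proof. exact (is_C_derive_continuous Cexp z _ (is_C_derive_Cexp z)). Qed.

(** * Integrals of complex-valued functions *)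

Definition RC_continuous_at (f : R -> C) (x : R) : Prop :=
  forall eps, 0 < eps -> exists delta, 0 < delta /\
    forall y, Rabs (y - x) < delta -> Cmod (f y - f x) < eps.

Lemma RC_continuous_at_continuous (f : R -> C) (x : R) :
  RC_continuous_at f x -> @continuous R_UniformSpace C_R_NormedModule f x.
Proof.
  intros H P [e He].
  destruct (H e (cond_pos e)) as [d [Hd Hf]].
  exists (mkposreal _ Hd). intros y Hy. apply He.
  specialize (Hf y Hy).
  split; simpl; unfold ball; simpl; unfold AbsRing_ball, abs, minus, plus, opp; simpl;
    eapply Rle_lt_trans; [| exact Hf | | exact Hf].
  - replace (fst (f y) + - fst (f x)) with (Re (f y - f x)%C) by (simpl; ring). apply re_le_Cmod.
  - replace (snd (f y) + - snd (f x)) with (Im (f y - f x)%C) by (simpl; ring). apply Rabs_im_le_Cmod.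
Qed.

Definition C_RInt (f : R -> C) (a b : R) : C := @RInt C_R_CompleteNormedModule f a b.
Definition is_C_RInt (f : R -> C) (a b : R) (l : C) : Prop := @is_RInt C_R_NormedModule f a b l.
Definition ex_C_RInt (f : R -> C) (a b : R) : Prop := @ex_RInt C_R_NormedModule f a b.

Lemma ex_C_RInt_continuous (f : R -> C) (a b : R) :
  (forall x, Rmin a b <= x <= Rmax a b -> RC_continuous_at f x) -> ex_C_RInt f a b.
Proof.
  intros H. apply (@ex_RInt_continuous C_R_CompleteNormedModule).
  intros x Hx. apply RC_continuous_at_continuous, H, Hx.
Qed.

Lemma C_RInt_correct (f : R -> C) (a b : R) : ex_C_RInt f a b -> is_C_RInt f a b (C_RInt f a b).
Proof. apply (@RInt_correct C_R_CompleteNormedModule). Qed.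

Lemma is_C_RInt_unique (f : R -> C) (a b : R) (l : C) : is_C_RInt f a b l -> C_RInt f a b = l.
Proof. apply (@is_RInt_unique C_R_CompleteNormedModule). Qed.

Lemma C_RInt_Chasles (f : R -> C) (a b c : R) :
  ex_C_RInt f a b -> ex_C_RInt f b c -> (C_RInt f a b + C_RInt f b c)%C = C_RInt f a c.
Proof. apply (@RInt_Chasles C_R_CompleteNormedModule). Qed.

Lemma C_RInt_ext (f g : R -> C) (a b : R) :
  (forall x, Rmin a b < x < Rmax a b -> f x = g x) -> C_RInt f a b = C_RInt g a b.
Proof. apply (@RInt_ext C_R_CompleteNormedModule). Qed.

Lemma is_C_RInt_re (f : R -> C) (a b : R) (l : C) :
  is_C_RInt f a b l -> is_RInt (fun t => Re (f t)) a b (Re l).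
Proof. apply (@is_RInt_fct_extend_fst R_NormedModule R_NormedModule). Qed.

Lemma is_C_RInt_im (f : R -> C) (a b : R) (l : C) :
  is_C_RInt f a b l -> is_RInt (fun t => Im (f t)) a b (Im l).
Proof. apply (@is_RInt_fct_extend_snd R_NormedModule R_NormedModule). Qed.

Lemma is_C_RInt_re_im (f : R -> C) (a b : R) (l : C) :
  is_RInt (fun t => Re (f t)) a b (Re l) -> is_RInt (fun t => Im (f t)) a b (Im l) ->
  is_C_RInt f a b l.
Proof.
  destruct l as [l1 l2].
  apply (@is_RInt_fct_extend_pair R_NormedModule R_NormedModule f a b l1 l2).
Qed.

Lemma is_C_RInt_minus (f g : R -> C) (a b : R) (l1 l2 : C) :
  is_C_RInt f a b l1 -> is_C_RInt g a b l2 -> is_C_RInt (fun t => f t - g t)%C a b (l1 - l2)%C.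
Proof. apply (@is_RInt_minus C_R_NormedModule). Qed.

Lemma is_C_RInt_const (c : C) (a b : R) : is_C_RInt (fun _ => c) a b (RtoC (b - a) * c)%C.
Proof.
  apply is_C_RInt_re_im.
  - replace (Re (RtoC (b - a) * c)) with (scal (b - a) (Re c))
      by (unfold scal, Re; simpl; unfold mult; simpl; ring).
    apply (is_RInt_const (V := R_NormedModule)).
  - replace (Im (RtoC (b - a) * c)) with (scal (b - a) (Im c))
      by (unfold scal, Im; simpl; unfold mult; simpl; ring).
    apply (is_RInt_const (V := R_NormedModule)).
Qed.

Lemma is_C_RInt_affine (f : R -> C) (a b : R) (l p q : C) :
  is_C_RInt f a b l -> is_C_RInt (fun t => p * f t + q)%C a b (p * l + RtoC (b - a) * q)%C.
Proof.
  intros H. assert (H1 := is_C_RInt_re _ _ _ _ H). assert (H2 := is_C_RInt_im _ _ _ _ H).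
  destruct p as [p1 p2], q as [q1 q2], l as [l1 l2]. unfold Re, Im in *; simpl in *.
  apply is_C_RInt_re_im; unfold Re, Im; simpl.
  - match goal with |- is_RInt _ _ _ ?v =>
      replace v with (p1 * l1 - p2 * l2 + (b - a) * q1) by ring end.
    apply (is_RInt_plus (V := R_NormedModule) (fun t => p1 * fst (f t) - p2 * snd (f t)) (fun _ => q1)).
    + apply (is_RInt_minus (V := R_NormedModule)); apply (is_RInt_scal (V := R_NormedModule)); auto.
    + apply (is_RInt_const (V := R_NormedModule)).
  - match goal with |- is_RInt _ _ _ ?v =>
      replace v with (p1 * l2 + p2 * l1 + (b - a) * q2) by ring end.
    apply (is_RInt_plus (V := R_NormedModule) (fun t => p1 * snd (f t) + p2 * fst (f t)) (fun _ => q2)).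
    + apply (is_RInt_plus (V := R_NormedModule)); apply (is_RInt_scal (V := R_NormedModule)); auto.
    + apply (is_RInt_const (V := R_NormedModule)).
Qed.

Lemma norm_C_R (z : C) : @norm _ C_R_NormedModule z = Cmod z.
Proof.
  destruct z as [a b]. unfold norm; simpl. unfold prod_norm, Cmod; simpl. unfold abs; simpl.
  f_equal. rewrite !Rmult_1_r, <- !Rabs_mult, !Rabs_pos_eq by nra. reflexivity.
Qed.

Lemma Cmod_is_C_RInt_le (f : R -> C) (a b M : R) (l : C) : a <= b ->
  (forall x, a <= x <= b -> Cmod (f x) <= M) -> is_C_RInt f a b l -> Cmod l <= (b - a) * M.
Proof.
  intros Hab HM Hl. rewrite <- norm_C_R.
  apply (@norm_RInt_le_const C_R_NormedModule f a b l M Hab); auto.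
  intros x Hx. rewrite norm_C_R. auto.
Qed.

Lemma is_RInt_id (a b : R) : is_RInt (fun x => x) a b ((b * b - a * a) / 2).
Proof.
  replace ((b * b - a * a) / 2) with (minus (b * b / 2) (a * a / 2))
    by (unfold minus, plus, opp; simpl; field).
  apply (is_RInt_derive (fun x => x * x / 2) (fun x => x)).
  - intros x _. auto_derive; auto. field.
  - intros x _. apply continuous_id.
Qed.

Lemma is_C_RInt_horizontal (a b y : R) :
  is_C_RInt (fun x => (x, y)) a b ((b * b - a * a) / 2, (b - a) * y).
Proof.
  apply is_C_RInt_re_im; unfold Re, Im; simpl; [apply is_RInt_id |].
  exact (is_RInt_const (V := R_NormedModule) a b _).
Qed.

Lemma is_C_RInt_vertical (c d x : R) :
  is_C_RInt (fun y => (x, y)) c d ((d - c) * x, (d * d - c * c) / 2).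
Proof.
  apply is_C_RInt_re_im; unfold Re, Im; simpl; [| apply is_RInt_id].
  exact (is_RInt_const (V := R_NormedModule) c d _).
Qed.

(** * Goursat's theorem *)

Definition C_continuous_on_rect (S : C -> C) (a b c d : R) : Prop :=
  forall x y, a <= x <= b -> c <= y <= d -> C_continuous_at S (x, y).

Definition rect_integral (S : C -> C) (a b c d : R) : C :=
  (C_RInt (fun x => S (x, c)) a b + Ci * C_RInt (fun y => S (b, y)) c d
   - C_RInt (fun x => S (x, d)) a b - Ci * C_RInt (fun y => S (a, y)) c d)%C.

Lemma C_continuous_on_rect_sub (S : C -> C) (a b c d a' b' c' d' : R) :
  a <= a' -> b' <= b -> c <= c' -> d' <= d ->
  C_continuous_on_rect S a b c d -> C_continuous_on_rect S a' b' c' d'.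
Proof. intros Ha Hb Hc Hd H x y Hx Hy. apply H; lra. Qed.

Lemma C_continuous_on_rect_derive (S : C -> C) (a b c d : R) :
  (forall x y, a <= x <= b -> c <= y <= d -> ex_C_derive S (x, y)) -> C_continuous_on_rect S a b c d.
Proof. intros H x y Hx Hy. apply ex_C_derive_continuous, H; auto. Qed.

Lemma RC_continuous_horizontal (S : C -> C) (x y : R) :
  C_continuous_at S (x, y) -> RC_continuous_at (fun t => S (t, y)) x.
Proof.
  intros H eps Heps. destruct (H eps Heps) as [d [Hd HS]]. exists d; split; auto.
  intros t Ht. apply HS.
  replace ((t, y) - (x, y))%C with (RtoC (t - x)) by (apply injective_projections; simpl; ring).
  rewrite Cmod_R. exact Ht.
Qed.

Lemma RC_continuous_vertical (S : C -> C) (x y : R) :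
  C_continuous_at S (x, y) -> RC_continuous_at (fun t => S (x, t)) y.
Proof.
  intros H eps Heps. destruct (H eps Heps) as [d [Hd HS]]. exists d; split; auto.
  intros t Ht. apply HS.
  replace ((x, t) - (x, y))%C with (Ci * RtoC (t - y))%C by (apply injective_projections; simpl; ring).
  rewrite Cmod_mult, Cmod_Ci, Cmod_R, Rmult_1_l. exact Ht.
Qed.

Lemma ex_C_RInt_horizontal (S : C -> C) (a b c d y : R) : a <= b -> c <= y <= d ->
  C_continuous_on_rect S a b c d -> ex_C_RInt (fun x => S (x, y)) a b.
Proof.
  intros Hab Hy H. apply ex_C_RInt_continuous. intros x Hx.
  rewrite Rmin_left, Rmax_right in Hx by lra. apply RC_continuous_horizontal, H; auto.
Qed.

Lemma ex_C_RInt_vertical (S : C -> C) (a b c d x : R) : c <= d -> a <= x <= b ->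
  C_continuous_on_rect S a b c d -> ex_C_RInt (fun y => S (x, y)) c d.
Proof.
  intros Hcd Hx H. apply ex_C_RInt_continuous. intros y Hy.
  rewrite Rmin_left, Rmax_right in Hy by lra. apply RC_continuous_vertical, H; auto.
Qed.

Lemma rect_integral_split_x (S : C -> C) (a m b c d : R) : a <= m <= b -> c <= d ->
  C_continuous_on_rect S a b c d ->
  rect_integral S a b c d = (rect_integral S a m c d + rect_integral S m b c d)%C.
Proof.
  intros Hm Hcd H. unfold rect_integral.
  assert (HL : C_continuous_on_rect S a m c d)
    by (apply (C_continuous_on_rect_sub S a b c d); lra || exact H).
  assert (HR : C_continuous_on_rect S m b c d)
    by (apply (C_continuous_on_rect_sub S a b c d); lra || exact H).
  rewrite <- (C_RInt_Chasles (fun x => S (x, c)) a m b), <- (C_RInt_Chasles (fun x => S (x, d)) a m b).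
  - ring.
  all: first [apply (ex_C_RInt_horizontal S a m c d) | apply (ex_C_RInt_horizontal S m b c d)]; auto; lra.
Qed.

Lemma rect_integral_split_y (S : C -> C) (a b c n d : R) : a <= b -> c <= n <= d ->
  C_continuous_on_rect S a b c d ->
  rect_integral S a b c d = (rect_integral S a b c n + rect_integral S a b n d)%C.
Proof.
  intros Hab Hn H. unfold rect_integral.
  assert (HB : C_continuous_on_rect S a b c n)
    by (apply (C_continuous_on_rect_sub S a b c d); lra || exact H).
  assert (HT : C_continuous_on_rect S a b n d)
    by (apply (C_continuous_on_rect_sub S a b c d); lra || exact H).
  rewrite <- (C_RInt_Chasles (fun y => S (b, y)) c n d), <- (C_RInt_Chasles (fun y => S (a, y)) c n d).
  - ring.
  all: first [apply (ex_C_RInt_vertical S a b c n) | apply (ex_C_RInt_vertical S a b n d)]; auto; lra.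
Qed.

Lemma rect_integral_sub_affine (S : C -> C) (A B : C) (a b c d : R) : a <= b -> c <= d ->
  C_continuous_on_rect S a b c d ->
  rect_integral (fun w => S w - (B * w + A))%C a b c d = rect_integral S a b c d.
Proof.
  intros Hab Hcd H.
  assert (Eh : forall y, c <= y <= d ->
    C_RInt (fun x => S (x, y) - (B * (x, y) + A))%C a b =
    (C_RInt (fun x => S (x, y)) a b - (B * (((b * b - a * a) / 2)%R, ((b - a) * y)%R) + RtoC (b - a) * A))%C).
  { intros y Hy. apply is_C_RInt_unique, is_C_RInt_minus.
    - apply C_RInt_correct, (ex_C_RInt_horizontal S a b c d); auto.
    - apply is_C_RInt_affine, is_C_RInt_horizontal. }
  assert (Ev : forall x, a <= x <= b ->
    C_RInt (fun y => S (x, y) - (B * (x, y) + A))%C c d =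
    (C_RInt (fun y => S (x, y)) c d - (B * (((d - c) * x)%R, ((d * d - c * c) / 2)%R) + RtoC (d - c) * A))%C).
  { intros x Hx. apply is_C_RInt_unique, is_C_RInt_minus.
    - apply C_RInt_correct, (ex_C_RInt_vertical S a b c d); auto.
    - apply is_C_RInt_affine, is_C_RInt_vertical. }
  unfold rect_integral. rewrite !Eh, !Ev by lra.
  apply injective_projections; simpl; ring.
Qed.

Lemma Cmod_rect_integral_le (S : C -> C) (a b c d M : R) : a <= b -> c <= d ->
  C_continuous_on_rect S a b c d ->
  (forall x y, a <= x <= b -> c <= y <= d -> Cmod (S (x, y)) <= M) ->
  Cmod (rect_integral S a b c d) <= 2 * ((b - a) + (d - c)) * M.
Proof.
  intros Hab Hcd H HM.
  assert (Bh : forall y, c <= y <= d -> Cmod (C_RInt (fun x => S (x, y)) a b) <= (b - a) * M).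
  { intros y Hy. apply (Cmod_is_C_RInt_le (fun x => S (x, y))); [exact Hab | intros; apply HM; auto |].
    apply C_RInt_correct, (ex_C_RInt_horizontal S a b c d); auto. }
  assert (Bv : forall x, a <= x <= b -> Cmod (C_RInt (fun y => S (x, y)) c d) <= (d - c) * M).
  { intros x Hx. apply (Cmod_is_C_RInt_le (fun y => S (x, y))); [exact Hcd | intros; apply HM; auto |].
    apply C_RInt_correct, (ex_C_RInt_vertical S a b c d); auto. }
  assert (B1 := Bh c ltac:(lra)). assert (B2 := Bv b ltac:(lra)).
  assert (B3 := Bh d ltac:(lra)). assert (B4 := Bv a ltac:(lra)).
  unfold rect_integral.
  set (I1 := C_RInt (fun x => S (x, c)) a b) in *. set (I2 := C_RInt (fun y => S (b, y)) c d) in *.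
  set (I3 := C_RInt (fun x => S (x, d)) a b) in *. set (I4 := C_RInt (fun y => S (a, y)) c d) in *.
  replace (I1 + Ci * I2 - I3 - Ci * I4)%C with (I1 + Ci * I2 + (- I3) + (- (Ci * I4)))%C by ring.
  eapply Rle_trans; [apply Cmod_triangle |].
  eapply Rle_trans; [apply Rplus_le_compat_r, Cmod_triangle |].
  eapply Rle_trans; [apply Rplus_le_compat_r, Rplus_le_compat_r, Cmod_triangle |].
  rewrite !Cmod_opp, !Cmod_mult, Cmod_Ci. lra.
Qed.

Lemma Cmod_rect_integral_linear_approx (F : C -> C) (z0 L : C) (a b c d eps : R) :
  a <= b -> c <= d ->
  (forall x y, a <= x <= b -> c <= y <= d -> ex_C_derive F (x, y)) ->
  (forall x y, a <= x <= b -> c <= y <= d -> Cmod (F (x, y) - F z0 - L * ((x, y) - z0)) <= eps) ->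
  Cmod (rect_integral F a b c d) <= 2 * ((b - a) + (d - c)) * eps.
Proof.
  intros Hab Hcd HF Happrox.
  rewrite <- (rect_integral_sub_affine F (F z0 - L * z0) L) by (auto; apply C_continuous_on_rect_derive, HF).
  apply Cmod_rect_integral_le; auto.
  - apply C_continuous_on_rect_derive. intros x y Hx Hy.
    destruct (HF x y Hx Hy) as [l Hl]. eexists.
    apply is_C_derive_minus; [exact Hl |].
    apply is_C_derive_plus; [apply is_C_derive_scal, is_C_derive_id | apply is_C_derive_const].
  - intros x y Hx Hy.
    replace (F (x, y) - (L * (x, y) + (F z0 - L * z0)))%C with (F (x, y) - F z0 - L * ((x, y) - z0))%C
      by ring.
    auto.
Qed.

Lemma eq_0_of_le_small_multiples (g K : R) : 0 <= g -> 0 <= K ->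
  (exists d0, 0 < d0 /\ forall d, 0 < d < d0 -> g <= d * K) -> g = 0.
Proof.
  intros Hg HK [d0 [Hd0 H]].
  destruct (Rle_lt_or_eq_dec 0 g Hg) as [Hlt |]; auto. exfalso.
  set (d := Rmin (d0 / 2) (g / (2 * (K + 1)))).
  assert (Hd : 0 < d) by (apply Rmin_pos; [lra | apply Rdiv_lt_0_compat; lra]).
  assert (Hd1 : d <= d0 / 2) by apply Rmin_l.
  assert (Hd2 : d * (2 * (K + 1)) <= g).
  { generalize (Rmin_r (d0 / 2) (g / (2 * (K + 1)))). fold d. intros Hr.
    apply (Rmult_le_compat_r (2 * (K + 1))) in Hr; [| lra].
    unfold Rdiv in Hr. rewrite Rmult_assoc, Rinv_l, Rmult_1_r in Hr by lra. exact Hr. }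
  specialize (H d ltac:(lra)). nra.
Qed.

Lemma nested_intervals_common_point (u v : nat -> R) : (forall n m, u n <= v m) ->
  { x | forall n, u n <= x <= v n }.
Proof.
  intros H.
  destruct (completeness (fun x => exists n, x = u n)) as [x [Hub Hlub]].
  - exists (v O). intros y [n ->]. apply H.
  - exists (u O). exists O. reflexivity.
  - exists x. intros n. split.
    + apply Hub. exists n. reflexivity.
    + apply Hlub. intros y [k ->]. apply H.
Qed.

Lemma exists_div_pow2_lt (K d : R) : 0 < d -> 0 <= K -> exists n : nat, K / 2 ^ n < d.
Proof.
  intros Hd HK.
  destruct (pow_lt_1_zero (/ 2) ltac:(rewrite Rabs_pos_eq; lra) (d / (K + 1))
              ltac:(apply Rdiv_lt_0_compat; lra)) as [N HN].
  exists N. specialize (HN N (le_n _)).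
  rewrite Rabs_pos_eq, pow_inv in HN by (try apply pow_le; lra).
  assert (P : 0 < / 2 ^ N) by (apply Rinv_0_lt_compat, pow_lt; lra).
  apply (Rmult_lt_compat_l (K + 1)) in HN; [| lra].
  replace ((K + 1) * (d / (K + 1))) with d in HN by (field; lra).
  unfold Rdiv. nra.
Qed.

Record rect : Type := Rect { rx0 : R; rx1 : R; ry0 : R; ry1 : R }.

Definition subrect (r' r : rect) : Prop :=
  rx0 r <= rx0 r' /\ rx0 r' <= rx1 r' /\ rx1 r' <= rx1 r /\
  ry0 r <= ry0 r' /\ ry0 r' <= ry1 r' /\ ry1 r' <= ry1 r.

Definition contour_integral (F : C -> C) (r : rect) : C := rect_integral F (rx0 r) (rx1 r) (ry0 r) (ry1 r).

Definition quarter (r : rect) (right top : bool) : rect :=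
  let mx := (rx0 r + rx1 r) / 2 in
  let my := (ry0 r + ry1 r) / 2 in
  Rect (if right then mx else rx0 r) (if right then rx1 r else mx)
       (if top then my else ry0 r) (if top then ry1 r else my).

(* The four quarters sum to [r], so if none of the first three carries a fourth of its
   contour integral, the last one does. *)
Definition bisect (F : C -> C) (r : rect) : rect :=
  let big q := Rle_dec (Cmod (contour_integral F r) / 4) (Cmod (contour_integral F q)) in
  if big (quarter r false false) then quarter r false false
  else if big (quarter r true false) then quarter r true false
  else if big (quarter r false true) then quarter r false true
  else quarter r true true.

Fixpoint bisections (F : C -> C) (r : rect) (n : nat) : rect :=
  match n with O => r | Datatypes.S k => bisect F (bisections F r k) end.

Section Bisection.

Variables (F : C -> C) (r0 : rect).
Hypothesis (Hr0x : rx0 r0 <= rx1 r0) (Hr0y : ry0 r0 <= ry1 r0)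
  (HF : C_continuous_on_rect F (rx0 r0) (rx1 r0) (ry0 r0) (ry1 r0)).

Lemma contour_integral_quarters (r : rect) : subrect r r0 ->
  contour_integral F r =
  (contour_integral F (quarter r false false) + contour_integral F (quarter r true false) +
   contour_integral F (quarter r false true) + contour_integral F (quarter r true true))%C.
Proof.
  destruct r as [a b c d]. unfold subrect, contour_integral, quarter; simpl. intros Hr.
  assert (H : C_continuous_on_rect F a b c d)
    by (apply (C_continuous_on_rect_sub F (rx0 r0) (rx1 r0) (ry0 r0) (ry1 r0)); tauto || exact HF).
  rewrite (rect_integral_split_x F a ((a + b) / 2) b c d) by (auto; lra).
  rewrite (rect_integral_split_y F a ((a + b) / 2) c ((c + d) / 2) d)
    by (try lra; apply (C_continuous_on_rect_sub F a b c d); lra || exact H).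
  rewrite (rect_integral_split_y F ((a + b) / 2) b c ((c + d) / 2) d)
    by (try lra; apply (C_continuous_on_rect_sub F a b c d); lra || exact H).
  ring.
Qed.

Lemma bisect_spec (r : rect) : subrect r r0 ->
  subrect (bisect F r) r /\
  rx1 (bisect F r) - rx0 (bisect F r) = (rx1 r - rx0 r) / 2 /\
  ry1 (bisect F r) - ry0 (bisect F r) = (ry1 r - ry0 r) / 2 /\
  Cmod (contour_integral F r) <= 4 * Cmod (contour_integral F (bisect F r)).
Proof.
  intros Hr. assert (Hsum := contour_integral_quarters r Hr).
  assert (Htri : Cmod (contour_integral F r) <=
    Cmod (contour_integral F (quarter r false false)) + Cmod (contour_integral F (quarter r true false)) +
    Cmod (contour_integral F (quarter r false true)) + Cmod (contour_integral F (quarter r true true))).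
  { rewrite Hsum. eapply Rle_trans; [apply Cmod_triangle | apply Rplus_le_compat_r].
    eapply Rle_trans; [apply Cmod_triangle | apply Rplus_le_compat_r]. apply Cmod_triangle. }
  unfold subrect in *. unfold bisect.
  repeat match goal with |- context [Rle_dec ?x ?y] => destruct (Rle_dec x y) end;
    unfold quarter in *; simpl in *; repeat split; lra.
Qed.

Lemma bisections_spec (n : nat) :
  subrect (bisections F r0 n) r0 /\
  rx1 (bisections F r0 n) - rx0 (bisections F r0 n) = (rx1 r0 - rx0 r0) / 2 ^ n /\
  ry1 (bisections F r0 n) - ry0 (bisections F r0 n) = (ry1 r0 - ry0 r0) / 2 ^ n /\
  Cmod (contour_integral F r0) <= 4 ^ n * Cmod (contour_integral F (bisections F r0 n)).
Proof.
  induction n as [| n [Hsub [Hw [Hh HI]]]]; simpl.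
  - unfold subrect. repeat split; lra.
  - destruct (bisect_spec _ Hsub) as [Hsub' [Hw' [Hh' HI']]].
    assert (P : 0 < 2 ^ n) by (apply pow_lt; lra).
    assert (0 <= 4 ^ n) by (apply pow_le; lra).
    unfold subrect in *. repeat split; try lra.
    + rewrite Hw', Hw. field. lra.
    + rewrite Hh', Hh. field. lra.
    + nra.
Qed.

Lemma bisections_nested (n m : nat) : (n <= m)%nat -> subrect (bisections F r0 m) (bisections F r0 n).
Proof.
  intros Hnm. induction Hnm.
  - destruct (bisections_spec n) as [H _]. unfold subrect in *. repeat split; lra.
  - destruct (bisections_spec m) as [Hm _]. destruct (bisect_spec _ Hm) as [H _].
    simpl. unfold subrect in *. repeat split; lra.
Qed.

Lemma bisections_common_point :
  exists x y, forall n, rx0 (bisections F r0 n) <= x <= rx1 (bisections F r0 n) /\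
                        ry0 (bisections F r0 n) <= y <= ry1 (bisections F r0 n).
Proof.
  assert (Hle : forall n m, subrect (bisections F r0 (max n m)) (bisections F r0 n) /\
                            subrect (bisections F r0 (max n m)) (bisections F r0 m))
    by (intros; split; apply bisections_nested; lia).
  destruct (nested_intervals_common_point (fun n => rx0 (bisections F r0 n))
                                          (fun n => rx1 (bisections F r0 n)))
    as [x Hx]; [intros n m; destruct (Hle n m); unfold subrect in *; lra |].
  destruct (nested_intervals_common_point (fun n => ry0 (bisections F r0 n))
                                          (fun n => ry1 (bisections F r0 n)))
    as [y Hy]; [intros n m; destruct (Hle n m); unfold subrect in *; lra |].
  exists x, y. intros n. auto.
Qed.

End Bisection.

Lemma Cmod_sub_le_rect_size (a b c d x y x0 y0 : R) :
  a <= x <= b -> a <= x0 <= b -> c <= y <= d -> c <= y0 <= d ->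
  Cmod ((x, y) - (x0, y0)) <= (b - a) + (d - c).
Proof.
  intros Hx Hx0 Hy Hy0. eapply Rle_trans; [apply Cmod_le_Rabs_re_im |].
  unfold Re, Im; simpl. unfold Rabs; repeat destruct Rcase_abs; lra.
Qed.

Theorem goursat (F : C -> C) (a b c d : R) : a <= b -> c <= d ->
  (forall x y, a <= x <= b -> c <= y <= d -> ex_C_derive F (x, y)) ->
  rect_integral F a b c d = 0%C.
Proof.
  intros Hab Hcd HF.
  assert (Hcont := C_continuous_on_rect_derive F a b c d HF).
  set (r0 := Rect a b c d).
  destruct (bisections_common_point F r0 Hab Hcd Hcont) as [x0 [y0 Hz0]].
  assert (Hx0 : a <= x0 <= b) by apply (Hz0 O).
  assert (Hy0 : c <= y0 <= d) by apply (Hz0 O).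
  destruct (HF x0 y0 Hx0 Hy0) as [L HL].
  set (W := (b - a) + (d - c)).
  apply Cmod_eq_0, (eq_0_of_le_small_multiples _ (2 * (W * W))); [apply Cmod_ge_0 | unfold W; nra |].
  exists 1. split; [lra |]. intros eps [Heps _].
  destruct (proj1 (is_C_derive_eps F (x0, y0) L) HL eps Heps) as [delta [Hdelta Happrox]].
  destruct (exists_div_pow2_lt W delta) as [n Hn]; [exact Hdelta | unfold W; lra |].
  destruct (bisections_spec F r0 Hab Hcd Hcont n) as [Hsub [Hw [Hh HI]]].
  set (r := bisections F r0 n) in *. simpl in Hw, Hh.
  assert (P : 0 < 2 ^ n) by (apply pow_lt; lra).
  assert (Hsize : (rx1 r - rx0 r) + (ry1 r - ry0 r) = W / 2 ^ n) by (rewrite Hw, Hh; unfold W; field; lra).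
  assert (Hr : Cmod (contour_integral F r) <=
                 2 * ((rx1 r - rx0 r) + (ry1 r - ry0 r)) * (eps * (W / 2 ^ n))).
  { unfold contour_integral. apply (Cmod_rect_integral_linear_approx F (x0, y0) L).
    1, 2: unfold subrect in Hsub; lra.
    - intros x y Hx Hy. apply HF; unfold subrect in Hsub; simpl in Hsub; lra.
    - intros x y Hx Hy.
      assert (Hdist : Cmod ((x, y) - (x0, y0)) <= W / 2 ^ n).
      { rewrite <- Hsize. apply Cmod_sub_le_rect_size; auto; apply Hz0. }
      eapply Rle_trans; [apply Happrox; lra |]. apply Rmult_le_compat_l; lra. }
  rewrite Hsize in Hr.
  replace (4 ^ n) with (2 ^ n * 2 ^ n) in HI by (rewrite <- Rpow_mult_distr; f_equal; ring).
  eapply Rle_trans; [exact HI |].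
  apply (Rmult_le_compat_l (2 ^ n * 2 ^ n)) in Hr; [| nra].
  eapply Rle_trans; [exact Hr |]. right. field. lra.
Qed.

Lemma rect_integral_split_around (S : C -> C) (a x1 x2 b c y1 y2 d : R) :
  a <= x1 <= x2 -> x2 <= b -> c <= y1 <= y2 -> y2 <= d -> C_continuous_on_rect S a b c d ->
  rect_integral S a b c d =
  (rect_integral S a x1 c d + rect_integral S x2 b c d + rect_integral S x1 x2 c y1 +
   rect_integral S x1 x2 y2 d + rect_integral S x1 x2 y1 y2)%C.
Proof.
  intros Hx1 Hx2 Hy1 Hy2 H.
  assert (Hmid : C_continuous_on_rect S x1 x2 c d)
    by (apply (C_continuous_on_rect_sub S a b c d); lra || exact H).
  rewrite (rect_integral_split_x S a x1 b c d), (rect_integral_split_x S x1 x2 b c d)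
    by (try lra; apply (C_continuous_on_rect_sub S a b c d); lra || exact H).
  rewrite (rect_integral_split_y S x1 x2 c y1 d), (rect_integral_split_y S x1 x2 y1 y2 d)
    by (try lra; apply (C_continuous_on_rect_sub S x1 x2 c d); lra || exact Hmid).
  ring.
Qed.

Theorem goursat_except_point (F : C -> C) (a b c d x0 y0 : R) :
  a < x0 < b -> c < y0 < d -> C_continuous_at F (x0, y0) ->
  (forall x y, a <= x <= b -> c <= y <= d -> (x, y) <> (x0, y0) -> ex_C_derive F (x, y)) ->
  rect_integral F a b c d = 0%C.
Proof.
  intros Hx0 Hy0 Hc HF.
  assert (Hcont : C_continuous_on_rect F a b c d).
  { intros x y Hx Hy. destruct (classic ((x, y) = (x0, y0))) as [E | E].
    - rewrite E. exact Hc.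
    - apply ex_C_derive_continuous, HF; auto. }
  destruct (Hc 1 Rlt_0_1) as [d0 [Hd0 Hnear]].
  set (B := Cmod (F (x0, y0)) + 1).
  assert (HB : 0 <= B) by (generalize (Cmod_ge_0 (F (x0, y0))); unfold B; lra).
  apply Cmod_eq_0, (eq_0_of_le_small_multiples _ (8 * B)); [apply Cmod_ge_0 | lra |].
  exists (Rmin (d0 / 4) (Rmin (Rmin (x0 - a) (b - x0)) (Rmin (y0 - c) (d - y0)))).
  split; [repeat apply Rmin_pos; lra |]. intros del [Hdel Hdel'].
  assert (Hsmall : del < d0 / 4 /\ del < x0 - a /\ del < b - x0 /\ del < y0 - c /\ del < d - y0).
  { revert Hdel'. unfold Rmin. repeat destruct Rle_dec; lra. }
  assert (Hout : forall a' b' c' d', a <= a' -> b' <= b -> c <= c' -> d' <= d -> a' <= b' -> c' <= d' ->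
            (b' < x0 \/ x0 < a' \/ d' < y0 \/ y0 < c') -> rect_integral F a' b' c' d' = 0%C).
  { intros a' b' c' d' ? ? ? ? ? ? Hoff. apply goursat; auto.
    intros x y Hx Hy. apply HF; try lra. intros E. injection E. intros. lra. }
  rewrite (rect_integral_split_around F a (x0 - del) (x0 + del) b c (y0 - del) (y0 + del) d)
    by (lra || exact Hcont).
  rewrite !Hout by lra. rewrite !Cplus_0_l.
  replace (del * (8 * B)) with (2 * ((x0 + del - (x0 - del)) + (y0 + del - (y0 - del))) * B) by ring.
  apply Cmod_rect_integral_le; try lra.
  - apply (C_continuous_on_rect_sub F a b c d); lra || exact Hcont.
  - intros x y Hx Hy.
    assert (Hdist : Cmod ((x, y) - (x0, y0)) < d0).
    { eapply Rle_lt_trans; [apply (Cmod_sub_le_rect_size (x0 - del) (x0 + del) (y0 - del) (y0 + del)) |];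
        lra. }
    specialize (Hnear _ Hdist).
    assert (Cmod (F (x, y)) <= Cmod (F (x, y) - F (x0, y0)) + Cmod (F (x0, y0))).
    { replace (F (x, y)) with ((F (x, y) - F (x0, y0)) + F (x0, y0))%C at 1 by ring. apply Cmod_triangle. }
    unfold B. lra.
Qed.

(** * The mean value property *)

Lemma unit_circle_cos_sin (x y : R) : x * x + y * y = 1 ->
  exists t, -PI <= t <= PI /\ x = cos t /\ y = sin t.
Proof.
  intros H.
  assert (Hx : -1 <= x <= 1) by nra.
  assert (Es : sqrt (1 - x²) = Rabs y) by (rewrite <- sqrt_Rsqr_abs; f_equal; unfold Rsqr; lra).
  assert (HB := acos_bound x). assert (PI_pos := PI_RGT_0).
  destruct (Rle_dec 0 y).
  - exists (acos x). rewrite cos_acos, sin_acos, Es, Rabs_pos_eq by auto. repeat split; lra.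
  - exists (- acos x). rewrite cos_neg, sin_neg, cos_acos, sin_acos, Es, Rabs_left by (auto; lra).
    repeat split; lra.
Qed.

Lemma Cexp_polar (p : C) : p <> 0%C -> exists t, -PI <= t <= PI /\ p = Cexp (ln (Cmod p), t).
Proof.
  intros Hp. assert (Hm : 0 < Cmod p) by (apply Cmod_gt_0; auto).
  assert (H := Cmod2_alt p). unfold Re, Im in H.
  destruct (unit_circle_cos_sin (fst p / Cmod p) (snd p / Cmod p)) as [t [Ht [E1 E2]]].
  { apply (Rmult_eq_reg_r (Cmod p ^ 2)); [| nra]. field_simplify; [| lra]. rewrite H. field. }
  exists t. split; auto. unfold Cexp, Re, Im; simpl. rewrite exp_ln, <- E1, <- E2 by auto.
  destruct p; simpl. f_equal; field; lra.
Qed.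

Lemma Cexp_unit_window (u : C) (t0 : R) : Cmod u = 1 -> -2 * PI <= t0 <= 0 ->
  exists t, t0 <= t <= t0 + 2 * PI /\ u = Cexp (0, t).
Proof.
  intros Hu Ht0. assert (PI_pos := PI_RGT_0).
  assert (Hp : u <> 0%C) by (intros E; rewrite E, Cmod_0 in Hu; lra).
  destruct (Cexp_polar u Hp) as [t [Ht Eu]]. rewrite Hu, ln_1 in Eu.
  destruct (Rle_dec t0 t); [destruct (Rle_dec t (t0 + 2 * PI)) |].
  - exists t. split; [lra | exact Eu].
  - exists (t - 2 * PI). split; [lra |]. rewrite Eu, <- (Cexp_add_2PI 0 (t - 2 * PI)). f_equal. f_equal. ring.
  - exists (t + 2 * PI). split; [lra |]. rewrite Cexp_add_2PI. exact Eu.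
Qed.

Lemma Cexp_inj_window (x y x' y' : R) : y' - PI <= y <= y' + PI ->
  Cexp (x, y) = Cexp (x', y') -> (x, y) = (x', y').
Proof.
  intros Hy E.
  assert (Hx : x = x').
  { apply exp_inv. generalize (Cmod_Cexp (x, y)) (Cmod_Cexp (x', y')). rewrite E. simpl. congruence. }
  subst x'. unfold Cexp, Re, Im in E; simpl in E. injection E as Ec Es.
  assert (Ep := exp_pos x).
  apply Rmult_eq_reg_l in Ec; [| lra]. apply Rmult_eq_reg_l in Es; [| lra].
  assert (Hc : cos (y - y') = 1).
  { rewrite cos_minus, Ec, Es. rewrite Rplus_comm. replace (sin y' * sin y' + cos y' * cos y')
      with ((sin y')² + (cos y')²) by (unfold Rsqr; ring). apply sin2_cos2. }
  assert (y - y' = 0).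
  { destruct (Rle_dec 0 (y - y')).
    - rewrite <- (acos_cos (y - y')), Hc by lra. apply acos_1.
    - assert (- (y - y') = 0) by (rewrite <- (acos_cos (- (y - y'))), cos_neg, Hc by lra; apply acos_1).
      lra. }
  f_equal. lra.
Qed.

Definition circle_integral (G : C -> C) (s t0 : R) : C :=
  C_RInt (fun t => G (Cexp (s, t))) t0 (t0 + 2 * PI).

(* Pulled back by [Cexp], the annulus between the circles of radii [exp s] and [1] is a
   rectangle whose horizontal sides are identified, so their contributions cancel. *)
Lemma circle_integral_eq_of_rect (G : C -> C) (s t0 : R) : s <= 0 ->
  C_continuous_on_rect (fun w => G (Cexp w)) s 0 t0 (t0 + 2 * PI) ->
  rect_integral (fun w => G (Cexp w)) s 0 t0 (t0 + 2 * PI) = 0%C ->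
  ex_C_RInt (fun t => G (Cexp (s, t))) t0 (t0 + 2 * PI) /\ circle_integral G 0 t0 = circle_integral G s t0.
Proof.
  intros Hs Hcont Hrect. assert (PI_pos := PI_RGT_0). split.
  - apply (ex_C_RInt_vertical (fun w => G (Cexp w)) s 0 t0 (t0 + 2 * PI)); auto; lra.
  - unfold rect_integral in Hrect. unfold circle_integral.
    rewrite (C_RInt_ext (fun x => G (Cexp (x, t0 + 2 * PI))) (fun x => G (Cexp (x, t0)))) in Hrect
      by (intros; rewrite Cexp_add_2PI; reflexivity).
    set (I0 := C_RInt (fun t => G (Cexp (0, t))) t0 (t0 + 2 * PI)) in *.
    set (Is := C_RInt (fun t => G (Cexp (s, t))) t0 (t0 + 2 * PI)) in *.
    set (H := C_RInt (fun x => G (Cexp (x, t0))) s 0) in *.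
    clearbody I0 Is H.
    replace I0 with (Is + - Ci * (H + Ci * I0 - H - Ci * Is))%C
      by (apply injective_projections; simpl; ring).
    rewrite Hrect. ring.
Qed.

Lemma circle_integral_center (G : C -> C) (t0 sb : R) : sb <= 0 -> C_continuous_at G 0 ->
  (forall s, s < sb -> ex_C_RInt (fun t => G (Cexp (s, t))) t0 (t0 + 2 * PI) /\
                       circle_integral G 0 t0 = circle_integral G s t0) ->
  circle_integral G 0 t0 = (RtoC (2 * PI) * G 0)%C.
Proof.
  intros Hsb Hc H. assert (PI_pos := PI_RGT_0).
  set (I0 := circle_integral G 0 t0).
  enough (Z : Cmod (I0 - RtoC (2 * PI) * G 0) = 0)
    by (apply Cmod_eq_0 in Z; replace I0 with ((I0 - RtoC (2 * PI) * G 0) + RtoC (2 * PI) * G 0)%C by ring;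
        rewrite Z; ring).
  apply (eq_0_of_le_small_multiples _ (2 * PI)); [apply Cmod_ge_0 | lra |].
  exists 1. split; [lra |]. intros eps [Heps _].
  destruct (Hc eps Heps) as [del [Hdel Hnear]].
  set (s := Rmin (sb - 1) (ln (del / 2))).
  assert (Hs : s < sb) by (generalize (Rmin_l (sb - 1) (ln (del / 2))); unfold s; lra).
  assert (Hexp : exp s < del).
  { apply (Rle_lt_trans _ (exp (ln (del / 2)))); [| rewrite exp_ln; lra].
    destruct (Rle_lt_or_eq_dec s (ln (del / 2)) (Rmin_r _ _)) as [Hl | ->];
      [apply Rlt_le, exp_increasing, Hl | lra]. }
  destruct (H s Hs) as [Hex Heq]. unfold I0. rewrite Heq.
  replace (eps * (2 * PI)) with ((t0 + 2 * PI - t0) * eps) by ring.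
  apply (Cmod_is_C_RInt_le (fun t => G (Cexp (s, t)) - G 0)%C); [lra | |].
  - intros t Ht. apply Rlt_le, Hnear.
    replace (Cexp (s, t) - 0)%C with (Cexp (s, t)) by ring. rewrite Cmod_Cexp. exact Hexp.
  - replace (2 * PI) with (t0 + 2 * PI - t0) at 2 by ring.
    apply is_C_RInt_minus; [apply C_RInt_correct, Hex | apply is_C_RInt_const].
Qed.

Lemma ex_C_derive_comp_Cexp (G : C -> C) (z : C) :
  ex_C_derive G (Cexp z) -> ex_C_derive (fun w => G (Cexp w)) z.
Proof. intros [l Hl]. eexists. exact (is_C_derive_comp Cexp G z _ l (is_C_derive_Cexp z) Hl). Qed.

Lemma Cmod_Cexp_le_1 (x y : R) : x <= 0 -> Cmod (Cexp (x, y)) <= 1.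
Proof.
  intros Hx. rewrite Cmod_Cexp, <- exp_0. simpl.
  destruct (Rle_lt_or_eq_dec x 0 Hx) as [Hlt | ->]; [apply Rlt_le, exp_increasing, Hlt | lra].
Qed.

(* The exceptional point [p], where [G] need only be continuous, is where the disc automorphisms
   used below move [0], at which the Schwarz quotient [H w / w] is not known to be
   differentiable. *)
Theorem mean_value_property (G : C -> C) (p : C) : Cmod p < 1 ->
  C_continuous_at G p -> C_continuous_at G 0 ->
  (forall u, Cmod u <= 1 -> u <> p -> ex_C_derive G u) ->
  exists t0, -2 * PI <= t0 <= 0 /\ circle_integral G 0 t0 = (RtoC (2 * PI) * G 0)%C.
Proof.
  intros Hp Hcp Hc0 HG. assert (PI_pos := PI_RGT_0).
  set (S := fun w => G (Cexp w)).
  assert (HS : forall x y, x <= 0 -> Cexp (x, y) <> p -> ex_C_derive S (x, y))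
    by (intros x y Hx Hne; apply ex_C_derive_comp_Cexp, HG; auto; apply Cmod_Cexp_le_1, Hx).
  destruct (classic (p = 0%C)) as [Hp0 | Hp0].
  - exists 0. split; [lra |]. apply (circle_integral_center G 0 0); [lra | exact Hc0 |].
    intros s Hs.
    assert (HSr : forall x y, s <= x <= 0 -> 0 <= y <= 0 + 2 * PI -> ex_C_derive S (x, y))
      by (intros x y Hx Hy; apply HS; [lra | rewrite Hp0; apply Cexp_neq_0]).
    apply circle_integral_eq_of_rect; [lra | apply C_continuous_on_rect_derive, HSr |].
    apply goursat; [lra | lra | exact HSr].
  - destruct (Cexp_polar p Hp0) as [al [Hal Epol]].
    assert (Hm : 0 < Cmod p) by (apply Cmod_gt_0; auto).
    assert (Hlm : ln (Cmod p) < 0) by (rewrite <- ln_1; apply ln_increasing; lra).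
    (* Start the angles at [al - PI] so that the preimage [(ln |p|, al)] of [p] is interior. *)
    exists (al - PI). split; [lra |].
    apply (circle_integral_center G (al - PI) (ln (Cmod p))); [lra | exact Hc0 |].
    intros s Hs.
    assert (Hpre : forall x y, al - PI <= y <= al - PI + 2 * PI -> Cexp (x, y) = p ->
                   (x, y) = (ln (Cmod p), al))
      by (intros x y Hy E; apply Cexp_inj_window; [lra | congruence]).
    assert (Hcont : C_continuous_on_rect S s 0 (al - PI) (al - PI + 2 * PI)).
    { intros x y Hx Hy. destruct (classic (Cexp (x, y) = p)) as [E | E].
      - apply (C_continuous_comp Cexp G); [apply C_continuous_Cexp | rewrite E; exact Hcp].
      - apply ex_C_derive_continuous, HS; [lra | exact E]. }
    apply circle_integral_eq_of_rect; [lra | exact Hcont |].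
    apply (goursat_except_point S s 0 (al - PI) (al - PI + 2 * PI) (ln (Cmod p)) al); try lra.
    + apply (C_continuous_comp Cexp G); [apply C_continuous_Cexp | rewrite <- Epol; exact Hcp].
    + intros x y Hx Hy Hne. apply HS; [lra |]. intros E. exact (Hne (Hpre x y Hy E)).
Qed.

(** * Disc automorphisms and the maximum modulus principle *)

Definition mobius (a u : C) : C := ((u + a) / (1 + Cconj a * u))%C.

Lemma mobius_Cmod_identity (a u : C) :
  Cmod (1 + Cconj a * u) ^ 2 - Cmod (u + a) ^ 2 = (1 - Cmod a ^ 2) * (1 - Cmod u ^ 2).
Proof. rewrite !Cmod2_alt. destruct a as [a1 a2], u as [u1 u2]. unfold Re, Im; simpl. ring. Qed.

Lemma mobius_den_neq_0 (a u : C) : Cmod a < 1 -> Cmod u <= 1 -> (1 + Cconj a * u)%C <> 0%C.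
Proof.
  intros Ha Hu E.
  assert (H : Cmod (Cconj a * u) < 1).
  { rewrite Cmod_mult, Cmod_conj. generalize (Cmod_ge_0 a) (Cmod_ge_0 u). nra. }
  replace (Cconj a * u)%C with (- (1))%C in H
    by (replace (Cconj a * u)%C with ((1 + Cconj a * u) - 1)%C by ring; rewrite E; ring).
  rewrite Cmod_m1 in H. lra.
Qed.

Lemma Cmod_mobius (a u : C) : Cmod a < 1 -> Cmod u <= 1 ->
  Cmod (mobius a u) ^ 2 * Cmod (1 + Cconj a * u) ^ 2 =
  Cmod (1 + Cconj a * u) ^ 2 - (1 - Cmod a ^ 2) * (1 - Cmod u ^ 2).
Proof.
  intros Ha Hu. unfold mobius. rewrite Cmod_div by (apply mobius_den_neq_0; auto).
  assert (Hd : 0 < Cmod (1 + Cconj a * u)) by (apply Cmod_gt_0, mobius_den_neq_0; auto).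
  rewrite <- mobius_Cmod_identity. field. lra.
Qed.

Lemma Cmod_mobius_le_1 (a u : C) : Cmod a < 1 -> Cmod u <= 1 -> Cmod (mobius a u) <= 1.
Proof.
  intros Ha Hu. assert (H := Cmod_mobius a u Ha Hu).
  assert (Hd : 0 < Cmod (1 + Cconj a * u)) by (apply Cmod_gt_0, mobius_den_neq_0; auto).
  assert (0 <= (1 - Cmod a ^ 2) * (1 - Cmod u ^ 2))
    by (generalize (Cmod_ge_0 a) (Cmod_ge_0 u); intros; apply Rmult_le_pos; nra).
  assert (Cmod (mobius a u) ^ 2 <= 1)
    by (apply (Rmult_le_reg_r (Cmod (1 + Cconj a * u) ^ 2)); [apply pow_lt, Hd | lra]).
  generalize (Cmod_ge_0 (mobius a u)). nra.
Qed.

Lemma Cmod_mobius_lt_1 (a u : C) : Cmod a < 1 -> Cmod u < 1 -> Cmod (mobius a u) < 1.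
Proof.
  intros Ha Hu. assert (H := Cmod_mobius a u Ha (Rlt_le _ _ Hu)).
  assert (Hd : 0 < Cmod (1 + Cconj a * u)) by (apply Cmod_gt_0, mobius_den_neq_0; lra).
  assert (0 < (1 - Cmod a ^ 2) * (1 - Cmod u ^ 2))
    by (generalize (Cmod_ge_0 a) (Cmod_ge_0 u); intros; apply Rmult_lt_0_compat; nra).
  assert (Cmod (mobius a u) ^ 2 < 1)
    by (apply (Rmult_lt_reg_r (Cmod (1 + Cconj a * u) ^ 2)); [apply pow_lt, Hd | lra]).
  generalize (Cmod_ge_0 (mobius a u)). nra.
Qed.

Lemma Cmod_mobius_eq_1 (a u : C) : Cmod a < 1 -> Cmod u = 1 -> Cmod (mobius a u) = 1.
Proof.
  intros Ha Hu. assert (H := Cmod_mobius a u Ha (Req_le _ _ Hu)). rewrite Hu in H.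
  assert (Hd : 0 < Cmod (1 + Cconj a * u)) by (apply Cmod_gt_0, mobius_den_neq_0; lra).
  assert (Cmod (mobius a u) ^ 2 = 1)
    by (apply (Rmult_eq_reg_r (Cmod (1 + Cconj a * u) ^ 2)); [lra | apply pow_nonzero; lra]).
  generalize (Cmod_ge_0 (mobius a u)). nra.
Qed.

Lemma mobius_0 (a : C) : mobius a 0 = a.
Proof. unfold mobius. field_simplify. reflexivity. Qed.

Lemma mobius_oppK (a u : C) : Cmod a < 1 -> Cmod u <= 1 -> mobius (- a) (mobius a u) = u.
Proof.
  intros Ha Hu. assert (Hd := mobius_den_neq_0 a u Ha Hu).
  assert (Haa : (1 - a * Cconj a)%C <> 0%C).
  { intros E. assert (H := Cmod2_conj a).
    replace (a * Cconj a)%C with (RtoC 1) in H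
      by (replace (a * Cconj a)%C with (1 - (1 - a * Cconj a))%C by ring; rewrite E; ring).
    apply (f_equal Re) in H. simpl in H. generalize (Cmod_ge_0 a). nra. }
  unfold mobius. rewrite Copp_conj.
  replace (1 + - Cconj a * ((u + a) / (1 + Cconj a * u)))%C
    with ((1 - a * Cconj a) / (1 + Cconj a * u))%C by (field; auto).
  field. split; auto.
Qed.

Lemma mobiusK (a v : C) : Cmod a < 1 -> Cmod v <= 1 -> mobius a (mobius (- a) v) = v.
Proof.
  intros Ha Hv. replace a with (- - a)%C at 1 by ring.
  apply mobius_oppK; [rewrite Cmod_opp |]; auto.
Qed.

Lemma ex_C_derive_mobius (a u : C) : (1 + Cconj a * u)%C <> 0%C -> ex_C_derive (mobius a) u.
Proof.
  intros Hd.
  assert (Hnum : is_C_derive (fun w => w + a)%C u (1 + 0)%C)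
    by (apply is_C_derive_plus; [apply is_C_derive_id | apply is_C_derive_const]).
  assert (Hden : is_C_derive (fun w => 1 + Cconj a * w)%C u (0 + Cconj a * 1)%C)
    by (apply is_C_derive_plus; [apply is_C_derive_const | apply is_C_derive_scal, is_C_derive_id]).
  eexists. exact (is_C_derive_div _ _ u _ _ Hnum Hden Hd).
Qed.

Definition disc_map (t : R) (z u : C) : C := (RtoC t * mobius (RtoC (/ t) * z) u)%C.

Definition disc_map_inv (t : R) (z w : C) : C := mobius (- (RtoC (/ t) * z)) (RtoC (/ t) * w).

Section DiscMap.

Variables (t : R) (z : C).
Hypotheses (Ht : 0 < t) (Hz : Cmod z < t).

Let Cmod_scaled (w : C) : Cmod (RtoC (/ t) * w) = Cmod w / t.
Proof. rewrite Cmod_RtoC_mult by (apply Rlt_le, Rinv_0_lt_compat, Ht). unfold Rdiv. ring. Qed.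

Let Ha : Cmod (RtoC (/ t) * z) < 1.
Proof. rewrite Cmod_scaled. apply Rlt_div_l; lra. Qed.

Let Ha' : Cmod (- (RtoC (/ t) * z)) < 1.
Proof. rewrite Cmod_opp. exact Ha. Qed.

Lemma disc_map_0 : disc_map t z 0 = z.
Proof. unfold disc_map. rewrite mobius_0. apply RtoC_scaleK. lra. Qed.

Lemma Cmod_disc_map_le (u : C) : Cmod u <= 1 -> Cmod (disc_map t z u) <= t.
Proof.
  intros Hu. unfold disc_map. rewrite Cmod_RtoC_mult by lra.
  generalize (Cmod_mobius_le_1 _ u Ha Hu). nra.
Qed.

Lemma Cmod_disc_map_eq (u : C) : Cmod u = 1 -> Cmod (disc_map t z u) = t.
Proof.
  intros Hu. unfold disc_map. rewrite Cmod_RtoC_mult, Cmod_mobius_eq_1 by (auto; lra). ring.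
Qed.

Lemma Cmod_disc_map_inv_lt (w : C) : Cmod w < t -> Cmod (disc_map_inv t z w) < 1.
Proof. intros Hw. apply Cmod_mobius_lt_1; [exact Ha' |]. rewrite Cmod_scaled. apply Rlt_div_l; lra. Qed.

Lemma Cmod_disc_map_inv_eq (w : C) : Cmod w = t -> Cmod (disc_map_inv t z w) = 1.
Proof. intros Hw. apply Cmod_mobius_eq_1; [exact Ha' |]. rewrite Cmod_scaled, Hw. field. lra. Qed.

Lemma disc_map_invK (u : C) : Cmod u <= 1 -> disc_map_inv t z (disc_map t z u) = u.
Proof.
  intros Hu. unfold disc_map_inv, disc_map.
  rewrite RtoC_inv_scaleK by lra. apply mobius_oppK; auto.
Qed.

Lemma disc_mapK (w : C) : Cmod w <= t -> disc_map t z (disc_map_inv t z w) = w.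
Proof.
  intros Hw. unfold disc_map_inv, disc_map. rewrite mobiusK; [apply RtoC_scaleK; lra | exact Ha |].
  rewrite Cmod_scaled. apply Rle_div_l; lra.
Qed.

Lemma ex_C_derive_disc_map (u : C) : Cmod u <= 1 -> ex_C_derive (disc_map t z) u.
Proof.
  intros Hu. destruct (ex_C_derive_mobius _ u (mobius_den_neq_0 _ u Ha Hu)) as [l Hl].
  eexists. exact (is_C_derive_scal _ u _ t Hl).
Qed.

End DiscMap.

Lemma RInt_eq_0_nonneg (g : R -> R) (a b : R) : a < b ->
  (forall x, a <= x <= b -> continuous g x) -> (forall x, a <= x <= b -> 0 <= g x) ->
  RInt g a b = 0 -> forall x, a <= x <= b -> g x = 0.
Proof.
  intros Hab Hc Hp Hi x0 Hx0.
  destruct (Rle_lt_or_eq_dec 0 (g x0) (Hp x0 Hx0)) as [Hlt |]; auto. exfalso.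
  destruct (Hc x0 Hx0 _ (locally_ball (g x0) (mkposreal (g x0 / 2) ltac:(lra)))) as [[d Hd] Hnear].
  simpl in Hnear.
  set (l := Rmax a (x0 - d / 2)). set (r := Rmin b (x0 + d / 2)).
  assert (Hl : a <= l <= x0 /\ x0 - d / 2 <= l)
    by (unfold l; split; [split; [apply Rmax_l | apply Rmax_lub; lra] | apply Rmax_r]).
  assert (Hr : x0 <= r <= b /\ r <= x0 + d / 2)
    by (unfold r; split; [split; [apply Rmin_glb; lra | apply Rmin_l] | apply Rmin_r]).
  assert (Hlr : l < r).
  { destruct (Rlt_le_dec x0 b).
    - assert (x0 < r) by (unfold r; apply Rmin_glb_lt; lra). lra.
    - assert (l < x0) by (unfold l; apply Rmax_lub_lt; lra). lra. }
  assert (Hint : forall u v, a <= u <= v -> v <= b -> ex_RInt g u v)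
    by (intros u v Hu Hv; apply (@ex_RInt_continuous R_CompleteNormedModule);
        rewrite Rmin_left, Rmax_right by lra; intros; apply Hc; lra).
  assert (I1 : 0 <= RInt g a l) by (apply RInt_ge_0; [lra | apply Hint; lra | intros; apply Hp; lra]).
  assert (I3 : 0 <= RInt g r b) by (apply RInt_ge_0; [lra | apply Hint; lra | intros; apply Hp; lra]).
  assert (I2 : 0 < RInt g l r).
  { apply RInt_gt_0; [exact Hlr | | intros; apply Hc; lra].
    intros x Hx. assert (Hd' : Rabs (x - x0) < d) by (unfold Rabs; destruct Rcase_abs; lra).
    specialize (Hnear x Hd'). unfold ball in Hnear; simpl in Hnear.
    unfold AbsRing_ball, abs, minus, plus, opp in Hnear; simpl in Hnear.
    unfold Rabs in Hnear. destruct Rcase_abs in Hnear; lra. }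
  rewrite <- (RInt_Chasles g a r b), <- (RInt_Chasles g a l r) in Hi by (apply Hint; lra).
  unfold plus in Hi; simpl in Hi. lra.
Qed.

(* Equality case of Cauchy-Schwarz: [|w - c|^2 = |w|^2 - |c|^2] here. *)
Lemma eq_of_Re_conj_mult (c w : C) :
  Cmod w <= Cmod c -> Re (Cconj c * w) = Cmod c ^ 2 -> w = c.
Proof.
  intros Hle HRe.
  assert (Hsq : Cmod w ^ 2 <= Cmod c ^ 2) by (generalize (Cmod_ge_0 w); nra).
  rewrite !Cmod2_alt in Hsq. rewrite Cmod2_alt in HRe.
  destruct c as [c1 c2], w as [w1 w2]. unfold Re, Im in *; simpl in *.
  assert (Hnonpos : (w1 - c1)² + (w2 - c2)² <= 0) by (unfold Rsqr; nra).
  assert (Hdist : (w1 - c1)² + (w2 - c2)² = 0)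
    by (generalize (Rle_0_sqr (w1 - c1)) (Rle_0_sqr (w2 - c2)); lra).
  destruct (Rplus_sqr_eq_0 _ _ Hdist). f_equal; lra.
Qed.

Lemma continuous_Re_mult (phi : R -> C) (c : C) (t : R) :
  RC_continuous_at phi t -> continuous (fun s => Re (c * phi s)) t.
Proof.
  intros Hphi P [e He].
  destruct (Hphi (e / (Cmod c + 1))) as [d [Hd Hnear]];
    [apply Rdiv_lt_0_compat; [apply cond_pos | generalize (Cmod_ge_0 c); lra] |].
  exists (mkposreal d Hd). intros s Hs. apply He.
  change (Rabs (Re (c * phi s) - Re (c * phi t)) < e).
  specialize (Hnear s Hs).
  replace (Re (c * phi s) - Re (c * phi t)) with (Re (c * (phi s - phi t))%C)
    by (unfold Re; simpl; ring).
  eapply Rle_lt_trans; [apply re_le_Cmod |]. rewrite Cmod_mult.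
  assert (Hpos := cond_pos e). assert (Hc := Cmod_ge_0 c).
  apply (Rmult_lt_compat_r (Cmod c + 1)) in Hnear; [| lra].
  replace (e / (Cmod c + 1) * (Cmod c + 1)) with (pos e) in Hnear by (field; lra).
  generalize (Cmod_ge_0 (phi s - phi t)). nra.
Qed.

(* The continuous function [|c|^2 - Re (conj c * phi)] is nonnegative with zero integral. *)
Lemma eq_of_C_RInt_max (phi : R -> C) (a b M : R) (c : C) : a < b ->
  (forall t, a <= t <= b -> RC_continuous_at phi t) ->
  (forall t, a <= t <= b -> Cmod (phi t) <= M) ->
  C_RInt phi a b = (RtoC (b - a) * c)%C -> Cmod c = M ->
  forall t, a <= t <= b -> phi t = c.
Proof.
  intros Hab Hc HM HI Hcm.
  set (psi := fun t => Cmod c ^ 2 - Re (Cconj c * phi t)).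
  assert (Hpsi_nonneg : forall t, a <= t <= b -> 0 <= psi t).
  { intros t Ht. unfold psi.
    assert (Hre := Rle_trans _ _ _ (Rle_abs _) (re_le_Cmod (Cconj c * phi t))).
    rewrite Cmod_mult, Cmod_conj in Hre. generalize (HM t Ht) (Cmod_ge_0 c). rewrite Hcm in *. nra. }
  assert (Hpsi_int : RInt psi a b = 0).
  { apply is_RInt_unique.
    assert (Hex : ex_C_RInt phi a b)
      by (apply ex_C_RInt_continuous; rewrite Rmin_left, Rmax_right by lra; exact Hc).
    assert (I1 := is_C_RInt_re _ _ _ _ (is_C_RInt_affine phi a b _ (Cconj c) 0%C (C_RInt_correct _ _ _ Hex))).
    assert (I2 := is_RInt_minus (V := R_NormedModule) _ _ _ _ _ _
                   (is_RInt_const (V := R_NormedModule) a b (Cmod c ^ 2)) I1).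
    rewrite HI in I2.
    replace 0 with (minus (scal (b - a) (Cmod c ^ 2))
                          (Re (Cconj c * (RtoC (b - a) * c) + RtoC (b - a) * 0)%C)).
    - apply (is_RInt_ext (V := R_NormedModule)) with (2 := I2).
      intros x _. unfold psi, minus, plus, opp; simpl. ring.
    - rewrite Cmod2_alt. destruct c as [c1 c2]. unfold minus, plus, opp, scal, Re, Im; simpl.
      unfold mult; simpl. ring. }
  intros t Ht. apply eq_of_Re_conj_mult; [rewrite Hcm; auto |].
  assert (Z := RInt_eq_0_nonneg psi a b Hab
                 (fun s Hs => continuous_minus _ _ s (continuous_const _ s)
                                                (continuous_Re_mult _ _ s (Hc s Hs)))
                 Hpsi_nonneg Hpsi_int t Ht).
  unfold psi in Z. lra.
Qed.

Lemma mean_value_property_disc (F : C -> C) (t : R) (e z : C) :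
  0 < t -> Cmod e < t -> Cmod z < t -> C_continuous_at F e ->
  (forall w, Cmod w <= t -> w <> e -> ex_C_derive F w) ->
  exists t0, -2 * PI <= t0 <= 0 /\
    circle_integral (fun u => F (disc_map t z u)) 0 t0 = (RtoC (2 * PI) * F z)%C.
Proof.
  intros Ht He Hz Hce HF.
  set (p := disc_map_inv t z e).
  assert (Hp : Cmod p < 1) by (apply Cmod_disc_map_inv_lt; auto).
  assert (Hmap_p : disc_map t z p = e) by (apply disc_mapK; auto; lra).
  assert (Hcz : C_continuous_at F z).
  { destruct (classic (z = e)) as [-> | Hne]; [exact Hce |].
    apply ex_C_derive_continuous, HF; [lra | exact Hne]. }
  replace (F z) with (F (disc_map t z 0)) by (rewrite disc_map_0; auto).
  apply mean_value_property with (p := p); [exact Hp | | |].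
  - apply (C_continuous_comp (disc_map t z) F).
    + apply ex_C_derive_continuous, ex_C_derive_disc_map; auto; lra.
    + rewrite Hmap_p. exact Hce.
  - apply (C_continuous_comp (disc_map t z) F).
    + apply ex_C_derive_continuous, ex_C_derive_disc_map; auto. rewrite Cmod_0. lra.
    + rewrite disc_map_0 by exact Ht. exact Hcz.
  - intros u Hu Hne. destruct (ex_C_derive_disc_map t z Ht Hz u Hu) as [l Hl].
    destruct (HF (disc_map t z u)) as [l' Hl'].
    + apply Cmod_disc_map_le; auto.
    + intros E. apply Hne. unfold p. rewrite <- E. symmetry. apply disc_map_invK; auto.
    + eexists. exact (is_C_derive_comp _ F u l l' Hl Hl').
Qed.

Theorem maximum_modulus (F : C -> C) (t : R) (e : C) (M : R) :
  0 < t -> Cmod e < t -> C_continuous_at F e ->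
  (forall w, Cmod w <= t -> w <> e -> ex_C_derive F w) ->
  (forall w, Cmod w = t -> Cmod (F w) <= M) ->
  forall z, Cmod z < t ->
    Cmod (F z) <= M /\ (Cmod (F z) = M -> forall w, Cmod w = t -> F w = F z).
Proof.
  intros Ht He Hce HF HM z Hz. assert (PI_pos := PI_RGT_0).
  destruct (mean_value_property_disc F t e z Ht He Hz Hce HF) as [t0 [Ht0 Hmean]].
  set (phi := fun s => F (disc_map t z (Cexp (0, s)))).
  assert (Hphi_bound : forall s, Cmod (phi s) <= M)
    by (intros s; apply HM, Cmod_disc_map_eq, Cmod_Cexp_pure_imag; auto).
  assert (Hphi_cont : forall s, RC_continuous_at phi s).
  { intros s. apply (RC_continuous_vertical (fun w => F (disc_map t z (Cexp w))) 0 s).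
    apply (C_continuous_comp Cexp (fun u => F (disc_map t z u))); [apply C_continuous_Cexp |].
    assert (Hu : Cmod (Cexp (0, s)) = 1) by apply Cmod_Cexp_pure_imag.
    apply ex_C_derive_continuous.
    destruct (ex_C_derive_disc_map t z Ht Hz _ (Req_le _ _ Hu)) as [l Hl].
    destruct (HF (disc_map t z (Cexp (0, s)))) as [l' Hl'].
    - apply Cmod_disc_map_le; auto. lra.
    - intros E. generalize (Cmod_disc_map_eq t z Ht Hz _ Hu). rewrite E. lra.
    - eexists. exact (is_C_derive_comp _ F _ l l' Hl Hl'). }
  assert (Hex : ex_C_RInt phi t0 (t0 + 2 * PI)) by (apply ex_C_RInt_continuous; auto).
  assert (Hmean' : C_RInt phi t0 (t0 + 2 * PI) = (RtoC (t0 + 2 * PI - t0) * F z)%C)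
    by (replace (t0 + 2 * PI - t0) with (2 * PI) by ring; exact Hmean).
  split.
  - assert (B := Cmod_is_C_RInt_le phi t0 (t0 + 2 * PI) M _ ltac:(lra) (fun s _ => Hphi_bound s)
                   (C_RInt_correct _ _ _ Hex)).
    rewrite Hmean', Cmod_RtoC_mult in B by lra.
    apply (Rmult_le_reg_l (2 * PI)); lra.
  - intros Hmax w Hw.
    assert (Hconst := eq_of_C_RInt_max phi t0 (t0 + 2 * PI) M (F z) ltac:(lra)
                        (fun s _ => Hphi_cont s) (fun s _ => Hphi_bound s) Hmean' Hmax).
    destruct (Cexp_unit_window (disc_map_inv t z w) t0) as [s [Hs Es]];
      [apply Cmod_disc_map_inv_eq; auto | exact Ht0 |].
    rewrite <- (disc_mapK t z Ht Hz w) by lra. rewrite Es. apply Hconst. exact Hs.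
Qed.

(** * The Schwarz lemma *)

Lemma maximum_modulus_interior (k : C -> C) (e z1 : C) (M : R) :
  Cmod e < 1 -> C_continuous_at k e ->
  (forall w, Cmod w < 1 -> w <> e -> ex_C_derive k w) ->
  (forall w, Cmod w < 1 -> Cmod (k w) <= M) ->
  Cmod z1 < 1 -> Cmod (k z1) = M ->
  forall w, Cmod w < 1 -> k w = k z1.
Proof.
  intros He Hce Hk HM Hz1 Hmax w Hw.
  set (t := (Rmax (Cmod w) (Rmax (Cmod z1) (Cmod e)) + 1) / 2).
  assert (Ht : Cmod w < t /\ Cmod z1 < t /\ Cmod e < t /\ t < 1).
  { unfold t.
    generalize (Rmax_l (Cmod w) (Rmax (Cmod z1) (Cmod e))) (Rmax_r (Cmod w) (Rmax (Cmod z1) (Cmod e)))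
      (Rmax_l (Cmod z1) (Cmod e)) (Rmax_r (Cmod z1) (Cmod e)).
    assert (Rmax (Cmod w) (Rmax (Cmod z1) (Cmod e)) < 1) by (repeat apply Rmax_lub_lt; auto).
    lra. }
  assert (Ht0 : 0 < t) by (generalize (Cmod_ge_0 w); lra).
  assert (Hk' : forall u, Cmod u <= t -> u <> e -> ex_C_derive k u) by (intros; apply Hk; auto; lra).
  assert (Hcircle : forall u, Cmod u = t -> k u = k z1).
  { intros u Hu. apply (maximum_modulus k t e M Ht0 (proj1 (proj2 (proj2 Ht))) Hce Hk'); try tauto.
    intros v Hv. apply HM. lra. }
  assert (Hdiff := maximum_modulus (fun u => k u - k z1)%C t e 0 Ht0 (proj1 (proj2 (proj2 Ht)))).
  destruct Hdiff with (z := w) as [Hle _]; try tauto.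
  - intros eps Heps. destruct (Hce eps Heps) as [d [Hd Hnear]]. exists d. split; auto.
    intros v Hv. replace (k v - k z1 - (k e - k z1))%C with (k v - k e)%C by ring. auto.
  - intros u Hu Hne. destruct (Hk' u Hu Hne) as [l Hl]. eexists.
    apply is_C_derive_minus; [exact Hl | apply is_C_derive_const].
  - intros u Hu. rewrite Hcircle by exact Hu. replace (k z1 - k z1)%C with (RtoC 0) by ring.
    rewrite Cmod_0. lra.
  - assert (Hzero : (k w - k z1)%C = 0%C)
      by (apply Cmod_eq_0; generalize (Cmod_ge_0 (k w - k z1)); lra).
    replace (k w) with ((k w - k z1) + k z1)%C by ring. rewrite Hzero. ring.
Qed.

Definition schwarz_quotient (H : C -> C) (L w : C) : C :=
  if Req_EM_T (Cmod w) 0 then L else (H w / w)%C.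

Lemma schwarz_quotient_neq_0 (H : C -> C) (L w : C) : w <> 0%C -> schwarz_quotient H L w = (H w / w)%C.
Proof.
  intros Hw. unfold schwarz_quotient.
  destruct (Req_EM_T (Cmod w) 0) as [E | _]; [now apply Cmod_eq_0 in E | reflexivity].
Qed.

Lemma schwarz_quotient_0 (H : C -> C) (L : C) : schwarz_quotient H L 0 = L.
Proof.
  unfold schwarz_quotient. rewrite Cmod_0.
  destruct (Req_EM_T 0 0) as [_ | n]; [reflexivity | now contradict n].
Qed.

Lemma C_continuous_schwarz_quotient_0 (H : C -> C) (L : C) :
  H 0 = 0%C -> is_C_derive H 0 L -> C_continuous_at (schwarz_quotient H L) 0.
Proof.
  intros H0 HL eps Heps.
  destruct (proj1 (is_C_derive_eps H 0 L) HL (eps / 2) ltac:(lra)) as [d [Hd Happrox]].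
  exists d. split; auto. intros w Hw. rewrite schwarz_quotient_0.
  destruct (classic (w = 0%C)) as [-> | Hw0].
  - rewrite schwarz_quotient_0. replace (L - L)%C with (RtoC 0) by ring. rewrite Cmod_0. lra.
  - rewrite schwarz_quotient_neq_0 by exact Hw0.
    specialize (Happrox w Hw). rewrite H0 in Happrox. replace (w - 0)%C with w in * by ring.
    assert (Hm : 0 < Cmod w) by (apply Cmod_gt_0; auto).
    replace (H w / w - L)%C with ((H w - 0 - L * w) / w)%C by (field; auto).
    rewrite Cmod_div by auto. apply Rlt_div_l; auto. nra.
Qed.

Lemma ex_C_derive_schwarz_quotient (H : C -> C) (L w : C) :
  w <> 0%C -> ex_C_derive H w -> ex_C_derive (schwarz_quotient H L) w.
Proof.
  intros Hw [l Hl]. assert (Hm : 0 < Cmod w) by (apply Cmod_gt_0; auto).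
  eexists. apply (is_C_derive_ext_loc (fun u => H u / u)%C _ w _ (Cmod w) Hm).
  - intros u Hu. rewrite schwarz_quotient_neq_0; [reflexivity |]. intros ->.
    replace (0 - w)%C with (- w)%C in Hu by ring. rewrite Cmod_opp in Hu. lra.
  - apply is_C_derive_div; [exact Hl | apply is_C_derive_id | exact Hw].
Qed.

Lemma le_1_of_forall_mult_le_1 (x a : R) : a < 1 -> (forall r, a < r < 1 -> x * r <= 1) -> x <= 1.
Proof.
  intros Ha H. destruct (Rle_dec x 1) as [| Hx]; [assumption | exfalso].
  set (r := (Rmax a (/ x) + 1) / 2).
  assert (Hinv : / x < 1) by (rewrite <- Rinv_1; apply Rinv_lt_contravar; lra).
  assert (Hr : a < r < 1 /\ / x < r)
    by (unfold r; generalize (Rmax_l a (/ x)) (Rmax_r a (/ x)) (Rmax_lub_lt a (/ x) 1 Ha Hinv); lra).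
  specialize (H r (proj1 Hr)).
  assert (Hlt : x * / x < x * r) by (apply Rmult_lt_compat_l; lra).
  rewrite Rinv_r in Hlt by lra. lra.
Qed.

Theorem schwarz_lemma (H : C -> C) :
  (forall w, Cmod w < 1 -> ex_C_derive H w) ->
  (forall w, Cmod w < 1 -> Cmod (H w) <= 1) -> H 0 = 0%C ->
  (forall z, Cmod z < 1 -> Cmod (H z) <= Cmod z) /\
  (forall z1, 0 < Cmod z1 < 1 -> Cmod (H z1) = Cmod z1 ->
     exists beta, Cmod beta = 1 /\ forall w, Cmod w < 1 -> H w = (beta * w)%C).
Proof.
  intros HD HB H0.
  destruct (HD 0 ltac:(rewrite Cmod_0; lra)) as [L HL].
  set (k := schwarz_quotient H L).
  assert (Hk0 : C_continuous_at k 0) by (apply C_continuous_schwarz_quotient_0; auto).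
  assert (Hk : forall w, Cmod w < 1 -> w <> 0%C -> ex_C_derive k w)
    by (intros w Hw Hne; apply ex_C_derive_schwarz_quotient; auto).
  assert (Hkmod : forall w : C, w <> 0%C -> Cmod (k w) = Cmod (H w) / Cmod w)
    by (intros w Hw; unfold k; rewrite schwarz_quotient_neq_0 by exact Hw; apply Cmod_div, Hw).
  assert (Hk_le : forall z, Cmod z < 1 -> Cmod (k z) <= 1).
  { intros z Hz. apply (le_1_of_forall_mult_le_1 _ (Cmod z) Hz). intros r Hr.
    assert (Hr0 : 0 < r) by (generalize (Cmod_ge_0 z); lra).
    apply (Rmult_le_reg_r (/ r)); [apply Rinv_0_lt_compat; lra |].
    rewrite Rmult_assoc, Rinv_r, Rmult_1_r, Rmult_1_l by lra.
    apply (maximum_modulus k r 0); auto; [rewrite Cmod_0; lra | | | lra].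
    - intros w Hw Hne. apply Hk; auto. lra.
    - intros w Hw. assert (w <> 0%C) by (intros ->; rewrite Cmod_0 in Hw; lra).
      rewrite Hkmod, Hw by auto. rewrite <- (Rmult_1_l (/ r)).
      apply Rmult_le_compat_r; [apply Rlt_le, Rinv_0_lt_compat; lra |]. apply HB. lra. }
  split.
  - intros z Hz. destruct (classic (z = 0%C)) as [-> | Hz0]; [rewrite H0, Cmod_0; lra |].
    assert (Hm : 0 < Cmod z) by (apply Cmod_gt_0; auto).
    specialize (Hk_le z Hz). rewrite Hkmod in Hk_le by exact Hz0.
    apply Rle_div_l in Hk_le; lra.
  - intros z1 Hz1 Heq.
    assert (Hz10 : z1 <> 0%C) by (intros ->; rewrite Cmod_0 in Hz1; lra).
    assert (Hkz1 : Cmod (k z1) = 1) by (rewrite Hkmod, Heq by exact Hz10; field; lra).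
    exists (k z1). split; [exact Hkz1 |]. intros w Hw.
    rewrite <- (maximum_modulus_interior k 0 z1 1 ltac:(rewrite Cmod_0; lra) Hk0 Hk Hk_le
                  (proj2 Hz1) Hkz1 w Hw).
    destruct (classic (w = 0%C)) as [-> | Hw0]; [rewrite H0; ring |].
    unfold k. rewrite schwarz_quotient_neq_0 by exact Hw0. field. exact Hw0.
Qed.

(** * Self-maps of the disc that are onto a smaller disc *)

Lemma Cmod_mobius_opp_antipode (a : C) (k : R) : 0 <= k -> a <> 0%C ->
  Cmod (mobius (- a) (RtoC (- k) * a)) = (k + 1) * Cmod a / (1 + k * Cmod a ^ 2).
Proof.
  intros Hk Ha. assert (Hs : 0 < Cmod a) by (apply Cmod_gt_0; auto).
  unfold mobius. rewrite Copp_conj.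
  replace (RtoC (- k) * a + - a)%C with (RtoC (- (k + 1)) * a)%C
    by (apply injective_projections; simpl; ring).
  replace (1 + - Cconj a * (RtoC (- k) * a))%C with (RtoC (1 + k * Cmod a ^ 2)).
  2: { rewrite Cmod2_alt. destruct a as [a1 a2]. unfold Re, Im.
       apply injective_projections; simpl; ring. }
  assert (Hden : 0 < 1 + k * Cmod a ^ 2) by nra.
  rewrite Cmod_div, Cmod_mult, !Cmod_R, Rabs_left, Rabs_pos_eq
    by (try intros E; try apply RtoC_inj in E; lra).
  field. lra.
Qed.

Lemma onto_small_disc_fixes_0 (g : C -> C) (rho : R) : 0 < rho < 1 ->
  (forall w, Cmod w < 1 -> ex_C_derive g w) ->
  (forall w, Cmod w < 1 -> Cmod (g w) <= 1) ->
  (forall w, Cmod w <= rho -> Cmod (g w) <= rho) ->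
  (forall v, Cmod v <= rho -> exists w, Cmod w <= rho /\ g w = v) ->
  g 0 = 0%C.
Proof.
  intros Hrho Hhol Hbd Hinto Honto.
  set (a := g 0). assert (Ha : Cmod a <= rho) by (apply Hinto; rewrite Cmod_0; lra).
  destruct (classic (a = 0%C)) as [| Ha0]; [assumption | exfalso].
  assert (Hs : 0 < Cmod a) by (apply Cmod_gt_0; auto).
  assert (Ha1 : Cmod (- a) < 1) by (rewrite Cmod_opp; lra).
  set (h := fun w => mobius (- a) (g w)).
  assert (Hh0 : h 0 = 0%C)
    by (unfold h, mobius; fold a; replace (a + - a)%C with (RtoC 0) by ring; unfold Cdiv; ring).
  destruct (schwarz_lemma h) as [Hschwarz _]; [| | exact Hh0 |].
  - intros w Hw. destruct (Hhol w Hw) as [l Hl].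
    destruct (ex_C_derive_mobius (- a) (g w)) as [l' Hl']; [apply mobius_den_neq_0; auto |].
    eexists. exact (is_C_derive_comp g _ w l l' Hl Hl').
  - intros w Hw. apply Cmod_mobius_le_1; auto.
  - set (k := rho / Cmod a).
    assert (Hk : 0 <= k) by (apply Rlt_le, Rdiv_lt_0_compat; lra).
    destruct (Honto (RtoC (- k) * a)%C) as [w [Hw Hgw]].
    { rewrite Cmod_mult, Cmod_R, Rabs_left1 by lra. unfold k. right. field. lra. }
    specialize (Hschwarz w ltac:(lra)). unfold h in Hschwarz.
    rewrite Hgw, Cmod_mobius_opp_antipode in Hschwarz by auto.
    unfold k in Hschwarz.
    replace ((rho / Cmod a + 1) * Cmod a / (1 + rho / Cmod a * Cmod a ^ 2))
      with ((rho + Cmod a) / (1 + rho * Cmod a)) in Hschwarz by (field; nra).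
    apply Rle_div_l in Hschwarz; [| nra].
    assert (Cmod w * (1 + rho * Cmod a) <= rho * (1 + rho * Cmod a)) by (apply Rmult_le_compat_r; nra).
    assert (Hrho2 : rho * rho < 1) by nra.
    assert (rho * rho * Cmod a < 1 * Cmod a) by (apply Rmult_lt_compat_r; lra).
    lra.
Qed.

Lemma rotation_of_onto_small_disc (g : C -> C) (rho : R) : 0 < rho < 1 ->
  (forall w, Cmod w < 1 -> ex_C_derive g w) ->
  (forall w, Cmod w < 1 -> Cmod (g w) <= 1) ->
  (forall w, Cmod w <= rho -> Cmod (g w) <= rho) ->
  (forall v, Cmod v <= rho -> exists w, Cmod w <= rho /\ g w = v) ->
  exists beta, Cmod beta = 1 /\ forall w, Cmod w < 1 -> g w = (beta * w)%C.
Proof.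
  intros Hrho Hhol Hbd Hinto Honto.
  assert (Hg0 := onto_small_disc_fixes_0 g rho Hrho Hhol Hbd Hinto Honto).
  destruct (schwarz_lemma g Hhol Hbd Hg0) as [Hle Heq].
  destruct (Honto (RtoC rho)) as [w [Hw Hgw]]; [rewrite Cmod_R, Rabs_pos_eq; lra |].
  assert (Hgw_mod : Cmod (g w) = rho) by (rewrite Hgw, Cmod_R, Rabs_pos_eq; lra).
  assert (Hw_mod := Hle w ltac:(lra)).
  apply (Heq w); lra.
Qed.

Definition rescale (r : R) (f : C -> C) (w : C) : C := (RtoC (/ r) * f (RtoC r * w))%C.

Section Rescale.

Variables (r : R) (f : C -> C).
Hypothesis (Hr : 0 < r).

Lemma Cmod_rescale (w : C) : Cmod (rescale r f w) = Cmod (f (RtoC r * w)%C) / r.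
Proof. unfold rescale. rewrite Cmod_RtoC_mult by (apply Rlt_le, Rinv_0_lt_compat, Hr). unfold Rdiv. ring. Qed.

Lemma ex_C_derive_rescale (w : C) : ex_C_derive f (RtoC r * w) -> ex_C_derive (rescale r f) w.
Proof.
  intros [l Hl].
  assert (Hlin : is_C_derive (fun u => RtoC r * u)%C w (RtoC r * 1)%C)
    by (apply is_C_derive_scal, is_C_derive_id).
  eexists. exact (is_C_derive_scal _ w _ (RtoC (/ r)) (is_C_derive_comp _ f w _ l Hlin Hl)).
Qed.

Lemma rescaleK (z : C) : (RtoC r * rescale r f (RtoC (/ r) * z))%C = f z.
Proof. unfold rescale. rewrite RtoC_scaleK, RtoC_scaleK by lra. reflexivity. Qed.

End Rescale.

Theorem lemma1p5 (eps : R) (f : C -> C) :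
  0 < eps ->
  holomorphic_on_disc (1 + eps) f ->
  (* f(closed unit disc) = closed unit disc *)
  (forall w : C, Cmod w <= 1 <-> exists z : C, Cmod z <= 1 /\ f z = w) ->
  (* f((1+eps)D) is contained in (1+eps)D *)
  (forall z : C, Cmod z < 1 + eps -> Cmod (f z) < 1 + eps) ->
  exists beta : C, Cmod beta = 1 /\
    forall z : C, Cmod z < 1 + eps -> f z = (beta * z)%C.
Proof.
  intros Heps Hhol Hsurj Hbd.
  set (r := 1 + eps) in *. assert (Hr : 1 < r) by (unfold r; lra).
  assert (Hrho : 0 < / r < 1)
    by (split; [apply Rinv_0_lt_compat | rewrite <- Rinv_1; apply Rinv_lt_contravar]; lra).
  assert (Hscale : forall w : C, Cmod (RtoC r * w) = r * Cmod w) by (intros; apply Cmod_RtoC_mult; lra).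
  destruct (rotation_of_onto_small_disc (rescale r f) (/ r) Hrho) as [beta [Hbeta Hg]].
  - intros w Hw. apply ex_C_derive_rescale, C_holomorphic_at_ex_C_derive, Hhol. rewrite Hscale. nra.
  - intros w Hw. rewrite Cmod_rescale by lra. apply Rle_div_l; [lra |]. rewrite Rmult_1_l.
    apply Rlt_le, Hbd. rewrite Hscale. nra.
  - intros w Hw. rewrite Cmod_rescale by lra. unfold Rdiv. rewrite <- (Rmult_1_l (/ r)) at 2.
    apply Rmult_le_compat_r; [lra |].
    apply Hsurj. exists (RtoC r * w)%C. split; [| reflexivity].
    rewrite Hscale. apply (Rmult_le_compat_l r) in Hw; [| lra]. rewrite Rinv_r in Hw; lra.
  - intros v Hv. destruct (proj1 (Hsurj (RtoC r * v)%C)) as [z [Hz Hfz]].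
    { rewrite Hscale. apply (Rmult_le_compat_l r) in Hv; [| lra]. rewrite Rinv_r in Hv; lra. }
    exists (RtoC (/ r) * z)%C. split.
    + rewrite Cmod_RtoC_mult by lra. rewrite <- (Rmult_1_r (/ r)) at 2. apply Rmult_le_compat_l; lra.
    + unfold rescale. rewrite RtoC_scaleK, Hfz, RtoC_inv_scaleK by lra. reflexivity.
  - exists beta. split; [exact Hbeta |]. intros z Hz.
    rewrite <- (rescaleK r f ltac:(lra) z), Hg.
    + rewrite Cmult_assoc, (Cmult_comm (RtoC r) beta), <- Cmult_assoc, RtoC_scaleK by lra. reflexivity.
    + rewrite Cmod_RtoC_mult by lra. apply (Rmult_lt_reg_l r); [lra |]. rewrite <- Rmult_assoc, Rinv_r; lra.
Qed.
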